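(* Let $N$ be a positive integer and let $(\mathbf{l}^N_n)_{n\in\mathbb{N}^+}$ be a sequence of numbers in $[-1,1]$ such that for some fixed sign $\varepsilon\in\{1,-1\}$ we have $\mathbf{l}^N_n=\varepsilon(-1)^n$ for all $n\ge N$. Let $\mathbb{A}=(a_n)_{n\in\mathbb{N}^+}$ be a sequence of integers with $2\le a_1<a_2<\cdots<a_n<a_{n+1}<\cdots$. Then the Euler product $$\zeta^{\mathbf{l}^N_n}_{\mathbb{A}}(s)=\prod_{n=1}^{\infty}\frac{1}{1-\mathbf{l}^N_n a_n^{-s}}$$ has an analytic continuation to the half-plane $\Re(s)>1/2$ which has no zeros and no singularities in this half-plane.
   Context: For $a>0$, $a^{-s}=e^{-s\ln a}$. The product converges for $\Re(s)>1$, where it defines $\zeta^{\mathbf{l}^N_n}_{\mathbb{A}}$. *)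

From Stdlib Require Import Reals ZArith.
From Coquelicot Require Import Coquelicot.
Open Scope R_scope.

Definition cexp (z : C) : C := (exp (Re z) * cos (Im z), exp (Re z) * sin (Im z)).

Definition cpow_neg (a : R) (s : C) : C := cexp (Copp (Cmult s (RtoC (ln a)))).

Definition euler_factor (l : nat -> R) (a : nat -> Z) (n : nat) (s : C) : C :=
  Cinv (Cminus (RtoC 1) (Cmult (RtoC (l n)) (cpow_neg (IZR (a n)) s))).

Fixpoint partial_euler_prod (l : nat -> R) (a : nat -> Z) (M : nat) (s : C) : C :=
  match M with
  | O => RtoC 1
  | S m => Cmult (partial_euler_prod l a m s) (euler_factor l a (S m) s)
  end.

Definition C_holomorphic_at (f : C -> C) (z : C) : Prop :=
  ex_derive (K := C_AbsRing) (V := C_NormedModule) f z.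

From Stdlib Require Import Reals ZArith Lra Lia.
From Coquelicot Require Import Coquelicot.
Open Scope R_scope.

(* For n >= N the signs l_n alternate, so two consecutive denominators multiply to
   (1 - l X1) (1 + l X2) = 1 - u with u = l (X1 - X2) + X1 X2, where X_n = a_n ^ (- s).
   On Re s >= 1/2 + 2 eta both X1 - X2 and X1 X2 are bounded by multiples of the telescoping
   differences a_m ^ (- eta) - a_(m+2) ^ (- eta), and so is the derivative of u.  Hence the
   partial products, their derivatives and the products of the denominators are uniformly
   Cauchy on compact parts of Re s > 1/2.  The limit is holomorphic because the derivatives
   converge uniformly as well (a complex mean value inequality passes the derivative to the
   limit), and it does not vanish because the products of the denominators, which are the
   inverses of the partial products, stay bounded. *)

(** * Elementary real estimates *)

Lemma Rabs_sub_le_of_derive_bound (f f' : R -> R) (x B : R) :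
  (forall t, Rabs t <= Rabs x -> derivable_pt_lim f t (f' t)) ->
  (forall t, Rabs t <= Rabs x -> Rabs (f' t) <= B) ->
  Rabs (f x - f 0) <= B * Rabs x.
Proof.
  intros Hd HB.
  assert (Hin : forall t, Rmin 0 x <= t <= Rmax 0 x -> Rabs t <= Rabs x).
  { intros t Ht. unfold Rmin, Rmax in Ht. apply Rabs_le.
    destruct (Rle_dec 0 x); [rewrite Rabs_pos_eq | rewrite Rabs_left]; lra. }
  destruct (MVT_abs f f' 0 x) as [c [Hc Hcx]]; [auto|].
  rewrite Hc, Rminus_0_r. apply Rmult_le_compat_r; [apply Rabs_pos | auto].
Qed.

Lemma Rabs_sin_le (y : R) : Rabs (sin y) <= Rabs y.
Proof.
  replace (sin y) with (sin y - sin 0) by (rewrite sin_0; ring).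
  rewrite <- (Rmult_1_l (Rabs y)). apply (Rabs_sub_le_of_derive_bound sin cos).
  - intros t _. apply derivable_pt_lim_sin.
  - intros t _. apply Rabs_le. pose proof (COS_bound t). lra.
Qed.

Lemma Rabs_cos_sub_1_le (y : R) : Rabs (cos y - 1) <= y ^ 2.
Proof.
  replace (cos y - 1) with (cos y - cos 0) by (rewrite cos_0; ring).
  replace (y ^ 2) with (Rabs y * Rabs y) by (rewrite <- Rabs_mult, Rabs_pos_eq by nra; ring).
  apply (Rabs_sub_le_of_derive_bound cos (fun t => - sin t)).
  - intros t _. apply derivable_pt_lim_cos.
  - intros t Ht. rewrite Rabs_Ropp. eapply Rle_trans; [apply Rabs_sin_le | exact Ht].
Qed.

Lemma Rabs_sin_sub_le (y : R) : Rabs y <= 1 -> Rabs (sin y - y) <= y ^ 2.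
Proof.
  intros Hy.
  replace (sin y - y) with ((sin y - y) - (sin 0 - 0)) by (rewrite sin_0; ring).
  replace (y ^ 2) with (Rabs y * Rabs y) by (rewrite <- Rabs_mult, Rabs_pos_eq by nra; ring).
  apply (Rabs_sub_le_of_derive_bound (fun t => sin t - t) (fun t => cos t - 1)).
  - intros t _. apply is_derive_Reals. auto_derive; auto. ring.
  - intros t Ht. eapply Rle_trans; [apply Rabs_cos_sub_1_le|].
    rewrite <- (pow2_abs t). pose proof (Rabs_pos t). nra.
Qed.

Lemma exp_le_3_of_le_1 (x : R) : x <= 1 -> exp x <= 3.
Proof.
  intros Hx. eapply Rle_trans; [|apply exp_le_3].
  destruct Hx as [Hx | ->]; [left; apply exp_increasing|]; lra.
Qed.

Lemma Rabs_exp_sub_1_le (x : R) : Rabs x <= 1 -> Rabs (exp x - 1) <= 3 * Rabs x.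
Proof.
  intros Hx. replace (exp x - 1) with (exp x - exp 0) by (rewrite exp_0; ring).
  apply (Rabs_sub_le_of_derive_bound exp exp).
  - intros t _. apply derivable_pt_lim_exp.
  - intros t Ht. rewrite Rabs_pos_eq by (left; apply exp_pos).
    apply exp_le_3_of_le_1. pose proof (Rle_abs t). lra.
Qed.

Lemma Rabs_exp_sub_1_sub_le (x : R) : Rabs x <= 1 -> Rabs (exp x - 1 - x) <= 3 * x ^ 2.
Proof.
  intros Hx.
  replace (exp x - 1 - x) with ((exp x - x) - (exp 0 - 0)) by (rewrite exp_0; ring).
  replace (3 * x ^ 2) with (3 * Rabs x * Rabs x) by (rewrite Rmult_assoc, <- Rabs_mult, Rabs_pos_eq by nra; ring).
  apply (Rabs_sub_le_of_derive_bound (fun t => exp t - t) (fun t => exp t - 1)).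
  - intros t _. apply is_derive_Reals. auto_derive; auto. ring.
  - intros t Ht. eapply Rle_trans; [apply Rabs_exp_sub_1_le; lra|]. lra.
Qed.

Lemma im_le_Cmod (z : C) : Rabs (Im z) <= Cmod z.
Proof. pose proof (Rmax_Cmod z). pose proof (Rmax_r (Rabs (fst z)) (Rabs (snd z))). unfold Im. lra. Qed.

Lemma Cmod_le_Re_Im (z : C) : Cmod z <= Rabs (Re z) + Rabs (Im z).
Proof.
  destruct z as [x y]. unfold Cmod, Re, Im; cbn [fst snd].
  rewrite <- (sqrt_Rsqr (Rabs x + Rabs y)) by (pose proof (Rabs_pos x); pose proof (Rabs_pos y); lra).
  apply sqrt_le_1_alt. unfold Rsqr. rewrite <- (pow2_abs x), <- (pow2_abs y).
  pose proof (Rabs_pos x); pose proof (Rabs_pos y). nra.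
Qed.

Lemma Re_minus (x y : C) : Re (x - y) = Re x - Re y.
Proof. destruct x, y. unfold Re. simpl. ring. Qed.

Lemma Im_minus (x y : C) : Im (x - y) = Im x - Im y.
Proof. destruct x, y. unfold Im. simpl. ring. Qed.

Lemma cexp_plus (z w : C) : cexp (z + w) = (cexp z * cexp w)%C.
Proof.
  destruct z as [x y], w as [u v]. unfold cexp, Cplus, Cmult, Re, Im; cbn.
  rewrite exp_plus, cos_plus, sin_plus. f_equal; ring.
Qed.

Lemma Cmod_cexp (z : C) : Cmod (cexp z) = exp (Re z).
Proof.
  destruct z as [x y]. unfold cexp, Cmod, Re, Im; cbn [fst snd].
  replace ((exp x * cos y) ^ 2 + (exp x * sin y) ^ 2) with (exp x ^ 2).
  - apply sqrt_pow2. left; apply exp_pos.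
  - pose proof (sin2_cos2 y) as Hsc. unfold Rsqr in Hsc. nra.
Qed.

Lemma Cmod_cexp_sub_1_sub_le (h : C) :
  Cmod h <= 1 -> Cmod (cexp h - 1 - h) <= 10 * Cmod h ^ 2.
Proof.
  intros Hh. pose proof (re_le_Cmod h) as Hx. pose proof (im_le_Cmod h) as Hy.
  destruct h as [x y]. unfold Re, Im in Hx, Hy; cbn [fst snd] in Hx, Hy.
  set (r := Cmod (x, y)) in *.
  replace (cexp (x, y) - 1 - (x, y))%C
    with (((exp x - 1 - x) + exp x * (cos y - 1), (exp x - 1) * sin y + (sin y - y)) : C)
    by (unfold cexp, Cminus, Cplus, Copp, RtoC, Re, Im; apply injective_projections; simpl; ring).
  eapply Rle_trans; [apply Cmod_le_Re_Im|]. unfold Re, Im; cbn [fst snd].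
  pose proof (Rabs_exp_sub_1_le x ltac:(lra)). pose proof (Rabs_exp_sub_1_sub_le x ltac:(lra)).
  pose proof (Rabs_cos_sub_1_le y). pose proof (Rabs_sin_sub_le y ltac:(lra)).
  pose proof (Rabs_sin_le y). pose proof (exp_le_3_of_le_1 x ltac:(pose proof (Rle_abs x); lra)).
  pose proof (exp_pos x). pose proof (Rabs_pos x). pose proof (Rabs_pos y).
  pose proof (Rabs_pos (cos y - 1)). pose proof (Rabs_pos (sin y)). pose proof (Rabs_pos (exp x - 1)).
  rewrite <- (pow2_abs x) in *. rewrite <- (pow2_abs y) in *.
  assert (exp x * Rabs (cos y - 1) <= 3 * r ^ 2) by nra.
  assert (Rabs (exp x - 1) * Rabs (sin y) <= 3 * r ^ 2) by nra.
  eapply Rle_trans; [apply Rplus_le_compat; apply Rabs_triang|].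
  rewrite !Rabs_mult, (Rabs_pos_eq (exp x)) by lra. nra.
Qed.

(** * Complex derivatives *)

(* Coquelicot's product and chain rules live in [AbsRing_NormedModule C_AbsRing], whose uniform
   structure differs from that of [C_NormedModule] used in [C_holomorphic_at]; the two notions are
   reconciled by [C_holomorphic_at_of_is_Cderive]. *)
Definition is_Cderive (f : C -> C) (z d : C) : Prop :=
  is_derive (K := C_AbsRing) (V := AbsRing_NormedModule C_AbsRing) f z d.

Lemma is_Cderive_spec (f : C -> C) (z d : C) :
  is_Cderive f z d <->
  forall e, 0 < e -> exists del, 0 < del /\ forall w, Cmod (w - z) < del ->
    Cmod (f w - f z - d * (w - z)) <= e * Cmod (w - z).
Proof.
  split.
  - intros [_ Hd] e He.
    destruct (Hd z (fun P H => H) (mkposreal e He)) as [del Hdel].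
    exists del. split; [apply cond_pos|]. intros w Hw.
    rewrite Cmult_comm. exact (Hdel w Hw).
  - intros H. split; [apply is_linear_scal_l|].
    intros x Hx.
    apply (@is_filter_lim_locally_unique _ (AbsRing_NormedModule C_AbsRing)) in Hx. subst x.
    intros e. destruct (H e (cond_pos e)) as [del [Hd Hdel]].
    exists (mkposreal _ Hd). intros w Hw.
    change (Cmod (f w - f z - (w - z) * d) <= e * Cmod (w - z)).
    rewrite Cmult_comm. exact (Hdel w Hw).
Qed.

Lemma C_holomorphic_at_of_is_Cderive (f : C -> C) (z d : C) :
  is_Cderive f z d -> C_holomorphic_at f z.
Proof.
  intros [[Hp Hs [M [HM HN]]] Hd]. exists d. split; [split; auto; exists M; auto|].
  exact Hd.
Qed.

Lemma is_Cderive_ext (f g : C -> C) (z d : C) :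
  (forall w, f w = g w) -> is_Cderive f z d -> is_Cderive g z d.
Proof. exact (is_derive_ext (V := AbsRing_NormedModule C_AbsRing) f g z d). Qed.

Lemma is_Cderive_const (k z : C) : is_Cderive (fun _ => k) z 0.
Proof. exact (is_derive_const (V := AbsRing_NormedModule C_AbsRing) k z). Qed.

Lemma is_Cderive_mult (f g : C -> C) (z df dg : C) :
  is_Cderive f z df -> is_Cderive g z dg ->
  is_Cderive (fun w => f w * g w)%C z (df * g z + f z * dg)%C.
Proof. intros Hf Hg. exact (is_derive_mult f g z df dg Hf Hg Cmult_comm). Qed.

Lemma is_Cderive_minus (f g : C -> C) (z df dg : C) :
  is_Cderive f z df -> is_Cderive g z dg ->
  is_Cderive (fun w => f w - g w)%C z (df - dg)%C.
Proof. intros Hf Hg. exact (is_derive_minus (V := AbsRing_NormedModule C_AbsRing) f g z df dg Hf Hg). Qed.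

Lemma is_Cderive_comp (f g : C -> C) (z dg df : C) :
  is_Cderive g z dg -> is_Cderive f (g z) df ->
  is_Cderive (fun w => f (g w)) z (dg * df)%C.
Proof. intros Hg Hf. exact (is_derive_comp (V := AbsRing_NormedModule C_AbsRing) f g z df dg Hf Hg). Qed.

Lemma is_Cderive_scal (k z : C) : is_Cderive (fun w => k * w)%C z k.
Proof.
  apply is_Cderive_spec. intros e He. exists 1. split; [lra|]. intros w _.
  replace (k * w - k * z - k * (w - z))%C with (RtoC 0) by ring.
  rewrite Cmod_0. pose proof (Cmod_ge_0 (w - z)). nra.
Qed.

Lemma is_Cderive_cexp (z : C) : is_Cderive cexp z (cexp z).
Proof.
  apply is_Cderive_spec. intros e He.
  set (E := Cmod (cexp z)). assert (HE : 0 <= E) by apply Cmod_ge_0.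
  exists (Rmin 1 (e / (10 * E + 1))). split.
  { apply Rmin_pos; [lra|]. apply Rdiv_lt_0_compat; lra. }
  intros w Hw.
  assert (Hw1 : Cmod (w - z) <= 1) by (pose proof (Rmin_l 1 (e / (10 * E + 1))); lra).
  assert (Hw2 : Cmod (w - z) * (10 * E + 1) <= e).
  { pose proof (Rmin_r 1 (e / (10 * E + 1))).
    apply Rmult_le_reg_r with (/ (10 * E + 1)); [apply Rinv_0_lt_compat; lra|].
    rewrite Rmult_assoc, Rinv_r, Rmult_1_r by lra. lra. }
  assert (Ew : cexp w = (cexp z * cexp (w - z))%C) by (rewrite <- cexp_plus; f_equal; ring).
  replace (cexp w - cexp z - cexp z * (w - z))%C
    with (cexp z * (cexp (w - z) - 1 - (w - z)))%C by (rewrite Ew; ring).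
  rewrite Cmod_mult. fold E.
  pose proof (Cmod_cexp_sub_1_sub_le (w - z) Hw1).
  set (k := Cmod (w - z)) in *. assert (Hk : 0 <= k) by apply Cmod_ge_0.
  apply Rle_trans with (E * (10 * k ^ 2)); [apply Rmult_le_compat_l; auto|]. nra.
Qed.

Lemma is_Cderive_Cinv (u : C) : u <> 0 -> is_Cderive Cinv u (- / (u * u))%C.
Proof.
  intros Hu. apply is_Cderive_spec. intros e He.
  assert (Hm : 0 < Cmod u) by (apply Cmod_gt_0; auto).
  assert (Hm3 : 0 < Cmod u ^ 3) by (apply pow_lt; auto).
  exists (Rmin (Cmod u / 2) (e * Cmod u ^ 3 / 2)). split.
  { apply Rmin_pos; [lra|]. apply Rdiv_lt_0_compat; [apply Rmult_lt_0_compat|]; lra. }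
  intros w Hw.
  set (k := Cmod (w - u)) in *. assert (Hk : 0 <= k) by apply Cmod_ge_0.
  assert (Hk1 : k <= Cmod u / 2) by (pose proof (Rmin_l (Cmod u / 2) (e * Cmod u ^ 3 / 2)); lra).
  assert (Hk2 : k <= e * Cmod u ^ 3 / 2) by (pose proof (Rmin_r (Cmod u / 2) (e * Cmod u ^ 3 / 2)); lra).
  assert (Hwm : Cmod u / 2 <= Cmod w).
  { pose proof (Cmod_triangle w (u - w)) as Htri. replace (w + (u - w))%C with u in Htri by ring.
    assert (Cmod (u - w) = k) by (unfold k; rewrite <- Cmod_opp; f_equal; ring). lra. }
  assert (Hw0 : w <> 0) by (intro E; rewrite E, Cmod_0 in Hwm; lra).
  replace (/ w - / u - - / (u * u) * (w - u))%C with ((w - u) * (w - u) / (u * u * w))%C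
    by (field; auto).
  unfold Cdiv. rewrite Cmod_mult, Cmod_inv, !Cmod_mult by (repeat apply Cmult_neq_0; auto).
  fold k.
  assert (Hd : Cmod u ^ 3 / 2 <= Cmod u * Cmod u * Cmod w) by (simpl; nra).
  assert (Hd0 : 0 < Cmod u ^ 3 / 2) by lra.
  apply Rle_trans with (k * k * / (Cmod u ^ 3 / 2)).
  - apply Rmult_le_compat_l; [nra|]. apply Rinv_le_contravar; lra.
  - apply Rmult_le_reg_r with (Cmod u ^ 3 / 2); [lra|].
    rewrite Rmult_assoc, Rinv_l, Rmult_1_r by lra. nra.
Qed.

Lemma derivable_pt_lim_Re_Im (G : R -> C) (t : R) (D : C) :
  (forall e, 0 < e -> exists del, 0 < del /\ forall tau, Rabs tau < del ->
     Cmod (G (t + tau) - G t - tau * D) <= e * Rabs tau) ->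
  derivable_pt_lim (fun tau => Re (G tau)) t (Re D) /\
  derivable_pt_lim (fun tau => Im (G tau)) t (Im D).
Proof.
  intros H.
  assert (Hp : forall p : C -> R, (forall z, Rabs (p z) <= Cmod z) ->
      (forall (x y : C) (r : R), p (x - y - r * D)%C = p x - p y - r * p D) ->
      derivable_pt_lim (fun tau => p (G tau)) t (p D)).
  { intros p Hle Hlin e He. destruct (H (e / 2)) as [del [Hd Hdel]]; [lra|].
    exists (mkposreal del Hd). intros tau Htau0 Htau. specialize (Hdel tau Htau).
    assert (Hpos : 0 < Rabs tau) by (apply Rabs_pos_lt; auto).
    replace ((p (G (t + tau)) - p (G t)) / tau - p D)
      with (p (G (t + tau)%R - G t - tau * D)%C / tau) by (rewrite Hlin; field; auto).
    unfold Rdiv. rewrite Rabs_mult, Rabs_inv.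
    apply Rmult_lt_reg_r with (Rabs tau); [auto|].
    rewrite Rmult_assoc, Rinv_l, Rmult_1_r by lra.
    pose proof (Hle (G (t + tau)%R - G t - tau * D)%C). nra. }
  split; apply Hp.
  - apply re_le_Cmod.
  - intros [x1 x2] [y1 y2] r. destruct D. unfold Re; simpl. ring.
  - apply im_le_Cmod.
  - intros [x1 x2] [y1 y2] r. destruct D. unfold Im; simpl. ring.
Qed.

Lemma derivable_pt_lim_Re_Im_line (h : C -> C) (c v : C) (t : R) (d : C) :
  is_Cderive h (c + t * v)%C d ->
  derivable_pt_lim (fun tau => Re (h (c + tau * v)%C)) t (Re (d * v)%C) /\
  derivable_pt_lim (fun tau => Im (h (c + tau * v)%C)) t (Im (d * v)%C).
Proof.
  intros Hd. apply (derivable_pt_lim_Re_Im (fun tau => h (c + tau * v)%C)).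
  intros e He. rewrite is_Cderive_spec in Hd.
  assert (Hv : 0 <= Cmod v) by apply Cmod_ge_0.
  destruct (Hd (e / (Cmod v + 1))) as [del [Hdel Hd']]; [apply Rdiv_lt_0_compat; lra|].
  exists (del / (Cmod v + 1)). split; [apply Rdiv_lt_0_compat; lra|]. intros tau Htau.
  assert (Hstep : (c + RtoC (t + tau) * v - (c + t * v))%C = (tau * v)%C) by (rewrite RtoC_plus; ring).
  assert (Hsmall : Cmod (tau * v) < del).
  { rewrite Cmod_mult, Cmod_R.
    assert (Rabs tau * (Cmod v + 1) < del).
    { apply Rmult_lt_compat_r with (r := Cmod v + 1) in Htau; [|lra].
      unfold Rdiv in Htau. rewrite Rmult_assoc, Rinv_l, Rmult_1_r in Htau by lra. exact Htau. }
    pose proof (Rabs_pos tau). nra. }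
  specialize (Hd' (c + RtoC (t + tau) * v)%C). rewrite Hstep in Hd'. specialize (Hd' Hsmall).
  replace (tau * (d * v))%C with (d * (tau * v))%C by ring.
  eapply Rle_trans; [exact Hd'|]. rewrite Cmod_mult, Cmod_R.
  replace (e / (Cmod v + 1) * (Rabs tau * Cmod v)) with (e * Rabs tau * (Cmod v / (Cmod v + 1))) by (field; lra).
  pose proof (Rabs_pos tau).
  assert (Cmod v / (Cmod v + 1) <= 1) by (apply Rmult_le_reg_r with (Cmod v + 1); [lra|]; unfold Rdiv; rewrite Rmult_assoc, Rinv_l; lra).
  rewrite <- (Rmult_1_r (e * Rabs tau)) at 2. apply Rmult_le_compat_l; nra.
Qed.

Lemma Rabs_sub_le_of_derive_dominated (f f' p p' : R -> R) (a b k : R) :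
  a <= b ->
  (forall t, a <= t <= b -> derivable_pt_lim f t (f' t)) ->
  (forall t, a <= t <= b -> derivable_pt_lim p t (p' t)) ->
  (forall t, a <= t <= b -> Rabs (f' t) <= - k * p' t) ->
  Rabs (f b - f a) <= k * (p a - p b).
Proof.
  intros [Hab | <-] Hf Hp Hb; [|rewrite Rminus_diag, Rabs_R0; lra].
  destruct (MVT_cor2 (fun t => f t + k * p t) (fun t => f' t + k * p' t) a b Hab) as [c1 [H1 Hc1]].
  { intros t Ht. apply derivable_pt_lim_plus; auto. apply derivable_pt_lim_scal. auto. }
  destruct (MVT_cor2 (fun t => k * p t - f t) (fun t => k * p' t - f' t) a b Hab) as [c2 [H2 Hc2]].
  { intros t Ht. apply derivable_pt_lim_minus; auto. apply derivable_pt_lim_scal. auto. }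
  pose proof (Hb c1 ltac:(lra)) as B1. pose proof (Hb c2 ltac:(lra)) as B2.
  apply Rabs_le_between in B1. apply Rabs_le_between in B2.
  apply Rabs_le. split; nra.
Qed.

Lemma Cmod_sub_le_of_derive_dominated (h dh : C -> C) (c v : C) (p p' : R -> R) (a b k : R) :
  a <= b ->
  (forall t, a <= t <= b -> is_Cderive h (c + t * v)%C (dh (c + t * v)%C)) ->
  (forall t, a <= t <= b -> derivable_pt_lim p t (p' t)) ->
  (forall t, a <= t <= b -> Cmod (dh (c + t * v)%C * v) <= - k * p' t) ->
  Cmod (h (c + b * v)%C - h (c + a * v)%C) <= 2 * k * (p a - p b).
Proof.
  (* The factor 2 comes from estimating the real and imaginary parts separately. *)
  intros Hab Hh Hp Hb.
  assert (Hcomp : forall q : C -> R, (forall z, Rabs (q z) <= Cmod z) ->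
      (forall t, a <= t <= b -> derivable_pt_lim (fun tau => q (h (c + tau * v)%C)) t (q (dh (c + t * v)%C * v)%C)) ->
      Rabs (q (h (c + b * v)%C) - q (h (c + a * v)%C)) <= k * (p a - p b)).
  { intros q Hq Hd.
    apply (Rabs_sub_le_of_derive_dominated (fun tau => q (h (c + tau * v)%C))
      (fun t => q (dh (c + t * v)%C * v)%C) p p'); auto.
    intros t Ht. eapply Rle_trans; [apply Hq | apply Hb; auto]. }
  pose proof (Hcomp Re re_le_Cmod (fun t Ht => proj1 (derivable_pt_lim_Re_Im_line h c v t _ (Hh t Ht)))).
  pose proof (Hcomp Im im_le_Cmod (fun t Ht => proj2 (derivable_pt_lim_Re_Im_line h c v t _ (Hh t Ht)))).
  eapply Rle_trans; [apply Cmod_le_Re_Im|].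
  rewrite Re_minus, Im_minus. lra.
Qed.

Lemma Cmod_sub_le_of_derive_bound (h dh : C -> C) (c w : C) (B : R) :
  (forall t, 0 <= t <= 1 -> is_Cderive h (c + t * (w - c))%C (dh (c + t * (w - c))%C)) ->
  (forall t, 0 <= t <= 1 -> Cmod (dh (c + t * (w - c))%C) <= B) ->
  Cmod (h w - h c) <= 2 * B * Cmod (w - c).
Proof.
  intros Hh HB.
  replace (h w - h c)%C with (h (c + 1 * (w - c))%C - h (c + 0 * (w - c))%C)%C
    by (f_equal; f_equal; ring).
  replace (2 * B * Cmod (w - c)) with (2 * (B * Cmod (w - c)) * (- 0 - - 1)) by ring.
  apply (Cmod_sub_le_of_derive_dominated h dh c (w - c) (fun t => - t) (fun _ => -1)); [lra | auto | |].
  - intros t _. apply is_derive_Reals. auto_derive; auto.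
  - intros t Ht. rewrite Cmod_mult. specialize (HB t Ht).
    pose proof (Cmod_ge_0 (w - c)). nra.
Qed.

(** * Limits of complex sequences *)

(* Only meaningful for convergent sequences: [Lim_seq] returns a junk value otherwise. *)
Definition Clim (u : nat -> C) : C :=
  (real (Lim_seq (fun n => Re (u n))), real (Lim_seq (fun n => Im (u n)))).

Lemma Lim_seq_spec_of_cauchy (u : nat -> R) :
  (forall e, 0 < e -> exists M, forall m n, (M <= m)%nat -> (M <= n)%nat -> Rabs (u m - u n) <= e) ->
  forall e, 0 < e -> exists M, forall n, (M <= n)%nat -> Rabs (u n - real (Lim_seq u)) < e.
Proof.
  intros H.
  assert (Hc : ex_lim_seq_cauchy u).
  { intros e. destruct (H (e / 2)) as [M HM]; [destruct e; simpl; lra|].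
    exists M. intros n m Hn Hm. specialize (HM n m Hn Hm). destruct e; simpl in *; lra. }
  apply ex_lim_seq_cauchy_corr in Hc. destruct Hc as [L HL].
  rewrite (is_lim_seq_unique _ _ HL). apply is_lim_seq_spec in HL.
  intros e He. destruct (HL (mkposreal _ He)) as [M HM]. exists M. exact HM.
Qed.

Lemma Clim_spec (u : nat -> C) :
  (forall e, 0 < e -> exists M, forall m n, (M <= m)%nat -> (M <= n)%nat -> Cmod (u m - u n) <= e) ->
  forall e, 0 < e -> exists M, forall n, (M <= n)%nat -> Cmod (u n - Clim u) < e.
Proof.
  intros H e He.
  assert (Hproj : forall p : C -> R, (forall z, Rabs (p z) <= Cmod z) -> (forall x y : C, p (x - y)%C = p x - p y) ->
      exists M, forall n, (M <= n)%nat -> Rabs (p (u n) - real (Lim_seq (fun k => p (u k)))) < e / 2).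
  { intros p Hle Hsub. apply (Lim_seq_spec_of_cauchy (fun k => p (u k))); [|lra].
    intros e' He'. destruct (H e' He') as [M HM]. exists M. intros m n Hm Hn.
    cbv beta. rewrite <- Hsub. eapply Rle_trans; [apply Hle | auto]. }
  destruct (Hproj Re re_le_Cmod Re_minus) as [M1 HM1].
  destruct (Hproj Im im_le_Cmod Im_minus) as [M2 HM2].
  exists (max M1 M2). intros n Hn.
  eapply Rle_lt_trans; [apply Cmod_le_Re_Im|]. rewrite Re_minus, Im_minus.
  specialize (HM1 n ltac:(lia)). specialize (HM2 n ltac:(lia)). unfold Clim, Re, Im in *; simpl in *. lra.
Qed.

Lemma filterlim_of_Cmod (u : nat -> C) (L : C) :
  (forall e, 0 < e -> exists M, forall n, (M <= n)%nat -> Cmod (u n - L) < e) ->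
  filterlim u eventually (locally L).
Proof.
  intros H P [e HP]. destruct (H e (cond_pos e)) as [M HM].
  exists M. intros n Hn. apply HP. apply C_NormedModule_mixin_compat1. auto.
Qed.

Lemma lim_neq_0_of_Cmod_ge (u : nat -> C) (L : C) (N : nat) (beta : R) :
  0 < beta ->
  (forall e, 0 < e -> exists M, forall n, (M <= n)%nat -> Cmod (u n - L) < e) ->
  (forall n, (N <= n)%nat -> beta <= Cmod (u n)) ->
  L <> 0.
Proof.
  intros Hb Hlim Hge HL. subst L. destruct (Hlim beta Hb) as [M HM].
  specialize (HM (max M N) ltac:(lia)). specialize (Hge (max M N) ltac:(lia)).
  replace (u (max M N) - 0)%C with (u (max M N)) in HM by ring. lra.
Qed.

Lemma inv_le_Cmod_of_mul_eq_1 (p q : C) (b : R) :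
  (p * q)%C = 1 -> Cmod q + 1 <= b -> / b <= Cmod p.
Proof.
  intros Hpq Hb. apply (f_equal Cmod) in Hpq. rewrite Cmod_mult, Cmod_1 in Hpq.
  pose proof (Cmod_ge_0 p). pose proof (Cmod_ge_0 q).
  apply Rmult_le_reg_r with b; [lra|]. rewrite Rinv_l by lra. nra.
Qed.

Lemma is_Cderive_lim (f df : nat -> C -> C) (F : C -> C) (c : C) (r : R) :
  0 < r ->
  (forall n z, Cmod (z - c) < r -> is_Cderive (f n) z (df n z)) ->
  (forall z, Cmod (z - c) < r -> forall e, 0 < e ->
     exists M, forall n, (M <= n)%nat -> Cmod (f n z - F z) < e) ->
  (forall e, 0 < e -> exists M, forall m n z, (M <= m)%nat -> (M <= n)%nat ->
     Cmod (z - c) < r -> Cmod (df m z - df n z) <= e) ->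
  is_Cderive F c (Clim (fun n => df n c)).
Proof.
  intros Hr Hder Hpt Hunif. apply is_Cderive_spec. intros eps He.
  set (g := Clim (fun n => df n c)). set (e1 := eps / 5).
  assert (He1 : 0 < e1) by (unfold e1; lra).
  assert (Hc0 : Cmod (c - c) < r) by (replace (c - c)%C with (RtoC 0) by ring; rewrite Cmod_0; lra).
  destruct (Hunif e1 He1) as [M1 HM1].
  destruct (Clim_spec (fun n => df n c)) with (e := e1) as [M2 HM2]; auto.
  { intros e He'. destruct (Hunif e He') as [M HM]. exists M. intros m n Hm Hn. apply HM; auto. }
  set (M := max M1 M2).
  destruct (proj1 (is_Cderive_spec _ _ _) (Hder M c Hc0) e1 He1) as [d0 [Hd0 H0]].
  exists (Rmin d0 r). split; [apply Rmin_pos; auto|].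
  intros w Hw.
  assert (Hw0 : Cmod (w - c) < d0) by (eapply Rlt_le_trans; [exact Hw | apply Rmin_l]).
  assert (Hwr : Cmod (w - c) < r) by (eapply Rlt_le_trans; [exact Hw | apply Rmin_r]).
  set (k := Cmod (w - c)) in *. assert (Hk : 0 <= k) by apply Cmod_ge_0.
  assert (Hseg : forall t, 0 <= t <= 1 -> Cmod (c + t * (w - c) - c) < r).
  { intros t Ht. replace (c + t * (w - c) - c)%C with (t * (w - c))%C by ring.
    rewrite Cmod_mult, Cmod_R, Rabs_pos_eq by lra. fold k. nra. }
  assert (Htail : forall n, (M <= n)%nat ->
    Cmod ((f n w - f M w) - (f n c - f M c)) <= 2 * e1 * k).
  { intros n Hn.
    apply (Cmod_sub_le_of_derive_bound (fun z => f n z - f M z)%C (fun z => df n z - df M z)%C).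
    - intros t Ht. apply is_Cderive_minus; apply Hder, Hseg, Ht.
    - intros t Ht. apply HM1; [lia | lia | apply Hseg, Ht]. }
  apply Rle_plus_epsilon. intros eta Heta.
  destruct (Hpt w Hwr (eta / 2)) as [Nw HNw]; [lra|].
  destruct (Hpt c Hc0 (eta / 2)) as [Nc HNc]; [lra|].
  set (n := max M (max Nw Nc)).
  specialize (Htail n ltac:(unfold n; lia)). specialize (HNw n ltac:(unfold n; lia)).
  specialize (HNc n ltac:(unfold n; lia)). specialize (H0 w Hw0).
  specialize (HM2 M ltac:(unfold M; lia)). cbv beta in HM2. fold g in HM2.
  set (A := (f n c - F c)%C) in *. set (B := (f n w - F w)%C) in *.
  set (T := ((f n w - f M w) - (f n c - f M c))%C) in *.
  set (D := (f M w - f M c - df M c * (w - c))%C) in *.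
  replace (F w - F c - g * (w - c))%C with (A - B + T + D + (df M c - g) * (w - c))%C
    by (unfold A, B, T, D; ring).
  pose proof (Cmod_triangle (A - B + T + D) ((df M c - g) * (w - c))) as T1.
  pose proof (Cmod_triangle (A - B + T) D) as T2. pose proof (Cmod_triangle (A - B) T) as T3.
  pose proof (Cmod_triangle A (- B)) as T4. rewrite Cmod_opp in T4.
  change (A + - B)%C with (A - B)%C in T4. fold k in H0.
  rewrite Cmod_mult in T1. fold k in T1.
  assert (Cmod (df M c - g) * k <= e1 * k) by (apply Rmult_le_compat_r; lra).
  unfold e1 in *. nra.
Qed.

(** * Decay of [t ^ (- s)] *)

Lemma exp_le_exp_of_le (x y : R) : x <= y -> exp x <= exp y.
Proof. intros [H | ->]; [left; apply exp_increasing |]; lra. Qed.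

Lemma ln_nonneg (t : R) : 1 <= t -> 0 <= ln t.
Proof. intros H. rewrite <- ln_1. destruct H as [H | <-]; [left; apply ln_increasing|]; lra. Qed.

Lemma mul_exp_neg_le (eta u : R) : 0 < eta -> u * exp (- eta * u) <= / eta.
Proof.
  intros He. pose proof (exp_ineq1_le (eta * u)). pose proof (exp_pos (eta * u)).
  replace (exp (- eta * u)) with (/ exp (eta * u)) by (rewrite <- exp_Ropp; f_equal; ring).
  apply Rmult_le_reg_r with (eta * exp (eta * u)); [apply Rmult_lt_0_compat; lra|].
  field_simplify; lra.
Qed.

Lemma Rpower_neg_le_1 (t eta : R) : 1 <= t -> 0 <= eta -> Rpower t (- eta) <= 1.
Proof.
  intros Ht He. unfold Rpower. rewrite <- exp_0. apply exp_le_exp_of_le.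
  pose proof (ln_nonneg t Ht). nra.
Qed.

Lemma Rpower_neg_antitone (t1 t2 eta : R) :
  0 < t1 -> t1 <= t2 -> 0 <= eta -> Rpower t2 (- eta) <= Rpower t1 (- eta).
Proof.
  intros Ht1 Ht Hs. unfold Rpower. apply exp_le_exp_of_le.
  pose proof (ln_le t1 t2 Ht1 Ht). nra.
Qed.

Lemma ln_mul_Rpower_le (t sig eta : R) :
  0 < eta -> 1 <= t -> ln t * Rpower t (- sig) <= Rpower t (eta - sig) / eta.
Proof.
  intros He Ht. unfold Rpower.
  replace ((eta - sig) * ln t) with (eta * ln t + - sig * ln t) by ring.
  rewrite exp_plus. pose proof (exp_pos (- sig * ln t)).
  apply Rle_trans with (exp (eta * ln t) / eta * exp (- sig * ln t)); [|right; field; lra].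
  apply Rmult_le_compat_r; [lra|].
  pose proof (mul_exp_neg_le eta (ln t) He) as Hmul.
  pose proof (exp_pos (eta * ln t)).
  replace (exp (- eta * ln t)) with (/ exp (eta * ln t)) in Hmul by (rewrite <- exp_Ropp; f_equal; ring).
  apply Rmult_le_reg_r with (/ exp (eta * ln t)); [apply Rinv_0_lt_compat; lra|].
  replace (exp (eta * ln t) / eta * / exp (eta * ln t)) with (/ eta) by (field; lra). lra.
Qed.

Lemma Rpower_neg_sub_1_le (t eta : R) :
  0 < eta -> 2 <= t -> Rpower t (- 1 - eta) <= (Rpower (t - 1) (- eta) - Rpower t (- eta)) / eta.
Proof.
  intros He Ht.
  destruct (MVT_cor2 (fun x => Rpower x (- eta)) (fun x => - eta * Rpower x (- eta - 1)) (t - 1) t)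
    as [c [Hc Hct]]; [lra | intros c Hc; apply derivable_pt_lim_power; lra |].
  replace ((Rpower (t - 1) (- eta) - Rpower t (- eta)) / eta) with (Rpower c (- eta - 1))
    by (replace (Rpower (t - 1) (- eta) - Rpower t (- eta)) with (- (Rpower t (- eta) - Rpower (t - 1) (- eta))) by ring;
        rewrite Hc; field; lra).
  replace (- 1 - eta) with (- (1 + eta)) by ring. replace (- eta - 1) with (- (1 + eta)) by ring.
  apply Rpower_neg_antitone; lra.
Qed.

Lemma Cmod_sub_le_of_exp_decay (h dh : C -> C) (u1 u2 B eta : R) :
  0 < eta -> u1 <= u2 ->
  (forall u, u1 <= u <= u2 -> is_Cderive h (RtoC u) (dh (RtoC u))) ->
  (forall u, u1 <= u <= u2 -> Cmod (dh (RtoC u)) <= B * exp (- eta * u)) ->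
  Cmod (h (RtoC u2) - h (RtoC u1)) <= 2 * (B / eta) * (exp (- eta * u1) - exp (- eta * u2)).
Proof.
  intros He Hu Hd Hb.
  assert (Hline : forall u : R, (0 + u * 1)%C = RtoC u) by (intros; ring).
  rewrite <- (Hline u1), <- (Hline u2).
  apply (Cmod_sub_le_of_derive_dominated h dh 0 1 (fun u => exp (- eta * u))
    (fun u => - eta * exp (- eta * u))); auto.
  - intros u Hu'. rewrite Hline. auto.
  - intros u _. apply is_derive_Reals. auto_derive; auto. ring.
  - intros u Hu'. rewrite Hline, Cmult_1_r.
    replace (- (B / eta) * (- eta * exp (- eta * u))) with (B * exp (- eta * u)) by (field; lra).
    auto.
Qed.

Lemma Cmod_cpow_neg (t : R) (s : C) : Cmod (cpow_neg t s) = Rpower t (- Re s).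
Proof.
  unfold cpow_neg. rewrite Cmod_cexp. unfold Rpower, Re. destruct s. simpl. f_equal. ring.
Qed.

Lemma is_Cderive_cexp_mul (k z : C) : is_Cderive (fun w => cexp (k * w)) z (k * cexp (k * z))%C.
Proof. apply (is_Cderive_comp cexp (fun w => k * w)%C). apply is_Cderive_scal. apply is_Cderive_cexp. Qed.

Lemma is_Cderive_cpow_neg (t : R) (z : C) :
  is_Cderive (fun s => cpow_neg t s) z (- ln t * cpow_neg t z)%C.
Proof.
  assert (E : forall s, cexp (- ln t * s)%C = cpow_neg t s) by (intros; unfold cpow_neg; f_equal; ring).
  rewrite <- E. apply (is_Cderive_ext _ _ _ _ E). apply is_Cderive_cexp_mul.
Qed.

Lemma Cmod_cexp_mul_real (s : C) (u : R) : Cmod (cexp (- (s * u))) = exp (- Re s * u).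
Proof. rewrite Cmod_cexp. f_equal. destruct s. unfold Re. simpl. ring. Qed.

Lemma Cmod_cpow_neg_sub_le (s : C) (K eta t1 t2 : R) :
  0 < eta -> eta <= Re s -> Cmod s <= K -> 1 <= t1 <= t2 ->
  Cmod (cpow_neg t1 s - cpow_neg t2 s) <= 2 * (K / eta) * (Rpower t1 (- eta) - Rpower t2 (- eta)).
Proof.
  intros He Hs HK Ht.
  rewrite <- Cmod_opp. replace (- (cpow_neg t1 s - cpow_neg t2 s))%C with (cpow_neg t2 s - cpow_neg t1 s)%C by ring.
  unfold cpow_neg, Rpower.
  apply (Cmod_sub_le_of_exp_decay (fun z => cexp (- (s * z))) (fun z => - s * cexp (- (s * z)))%C); auto.
  - apply ln_le; lra.
  - intros u _. apply (is_Cderive_ext (fun z => cexp (- s * z))); [intros; f_equal; ring|].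
    replace (- s * cexp (- (s * u)))%C with (- s * cexp (- s * u))%C by (f_equal; f_equal; ring).
    apply is_Cderive_cexp_mul.
  - intros u Hu. pose proof (ln_nonneg t1 ltac:(lra)).
    rewrite Cmod_mult, Cmod_opp, Cmod_cexp_mul_real.
    apply Rmult_le_compat; [apply Cmod_ge_0 | left; apply exp_pos | auto |].
    apply exp_le_exp_of_le. nra.
Qed.

Lemma Cmod_ln_mul_cpow_neg_sub_le (s : C) (K eta t1 t2 : R) :
  0 < eta -> 2 * eta <= Re s -> Cmod s <= K -> 1 <= t1 <= t2 ->
  Cmod (ln t1 * cpow_neg t1 s - ln t2 * cpow_neg t2 s)
    <= 2 * ((1 + K / eta) / eta) * (Rpower t1 (- eta) - Rpower t2 (- eta)).
Proof.
  intros He Hs HK Ht.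
  rewrite <- Cmod_opp.
  replace (- (ln t1 * cpow_neg t1 s - ln t2 * cpow_neg t2 s))%C
    with (ln t2 * cpow_neg t2 s - ln t1 * cpow_neg t1 s)%C by ring.
  unfold cpow_neg, Rpower.
  apply (Cmod_sub_le_of_exp_decay (fun z => z * cexp (- (s * z)))%C
    (fun z => 1 * cexp (- (s * z)) + z * (- s * cexp (- (s * z))))%C); auto.
  - apply ln_le; lra.
  - intros u _. apply (is_Cderive_mult (fun z => z) (fun z => cexp (- (s * z)))).
    + apply (is_Cderive_ext (fun z => 1 * z)%C); [intros; ring | apply is_Cderive_scal].
    + apply (is_Cderive_ext (fun z => cexp (- s * z))); [intros; f_equal; ring|].
      replace (- s * cexp (- (s * u)))%C with (- s * cexp (- s * u))%C by (f_equal; f_equal; ring).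
      apply is_Cderive_cexp_mul.
  - intros u Hu. pose proof (ln_nonneg t1 ltac:(lra)) as Hu0.
    assert (Hdecay : exp (- Re s * u) <= exp (- eta * u) * exp (- eta * u))
      by (rewrite <- exp_plus; apply exp_le_exp_of_le; nra).
    pose proof (mul_exp_neg_le eta u He). pose proof (exp_pos (- eta * u)). pose proof (exp_pos (- Re s * u)).
    eapply Rle_trans; [apply Cmod_triangle|].
    rewrite !Cmod_mult, Cmod_opp, Cmod_1, Cmod_R, Rabs_pos_eq, Cmod_cexp_mul_real by lra.
    assert (u * exp (- eta * u) * K <= K / eta).
    { unfold Rdiv. rewrite Rmult_comm. apply Rmult_le_compat_l; [pose proof (Cmod_ge_0 s); lra | auto]. }
    assert (u * (Cmod s * exp (- Re s * u)) <= u * exp (- eta * u) * K * exp (- eta * u)).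
    { replace (u * exp (- eta * u) * K * exp (- eta * u)) with (u * (K * (exp (- eta * u) * exp (- eta * u)))) by ring.
      apply Rmult_le_compat_l; [lra|]. apply Rmult_le_compat; auto using Cmod_ge_0; lra. }
    assert (1 * exp (- Re s * u) <= exp (- eta * u)).
    { assert (exp (- eta * u) <= 1) by (rewrite <- exp_0; apply exp_le_exp_of_le; nra).
      assert (exp (- eta * u) * exp (- eta * u) <= exp (- eta * u) * 1) by (apply Rmult_le_compat_l; lra).
      lra. }
    nra.
Qed.

Lemma Cmod_cpow_neg_le_3_4 (t : R) (s : C) : 2 <= t -> 1 / 2 < Re s -> Cmod (cpow_neg t s) <= 3 / 4.
Proof.
  intros Ht Hs. rewrite Cmod_cpow_neg. unfold Rpower.
  apply Rle_trans with (exp (- (1 / 2) * ln 2)).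
  - apply exp_le_exp_of_le. pose proof (ln_le 2 t ltac:(lra) Ht). pose proof ln_lt_2. nra.
  - assert (Hsq : exp (- (1 / 2) * ln 2) * exp (- (1 / 2) * ln 2) = / 2)
      by (rewrite <- exp_plus; replace (- (1 / 2) * ln 2 + - (1 / 2) * ln 2) with (- ln 2) by lra;
          rewrite exp_Ropp, exp_ln by lra; reflexivity).
    pose proof (exp_pos (- (1 / 2) * ln 2)). nra.
Qed.

(** * Products of factors that are close to 1 in pairs *)

Lemma antitone_shift (w : nat -> R) (N : nat) :
  (forall m, (N <= m)%nat -> 0 <= w (S m) <= w m) ->
  forall M k, (N <= M)%nat -> 0 <= w (M + k)%nat <= w M.
Proof.
  intros Hw M k HM. induction k as [|k IH]; [rewrite Nat.add_0_r; pose proof (Hw M HM); lra|].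
  replace (M + S k)%nat with (S (M + k)) by lia. pose proof (Hw (M + k)%nat ltac:(lia)). lra.
Qed.

Section PairSteps.

Variables (x : nat -> C) (w : nat -> R) (N : nat).
Hypothesis Hw : forall m, (N <= m)%nat -> 0 <= w (S m) <= w m.

Lemma Cmod_sub_le_of_pair_steps (C1 C2 : R) :
  0 <= C1 -> 0 <= C2 ->
  (forall m, (N <= m)%nat -> Cmod (x (S (S m)) - x m) <= C1 * (w m - w (S (S m)))) ->
  (forall m, (N <= m)%nat -> Cmod (x (S m) - x m) <= C2 * w m) ->
  forall M n, (N <= M)%nat -> (M <= n)%nat -> Cmod (x n - x M) <= (C1 + C2) * w M.
Proof.
  intros HC1 HC2 Hpair Hsing M n HM Hn.
  pose proof (antitone_shift w N Hw M) as Hmono.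
  assert (Heven : forall j, Cmod (x (M + 2 * j)%nat - x M) <= C1 * (w M - w (M + 2 * j)%nat)).
  { induction j as [|j IH].
    - replace (M + 2 * 0)%nat with M by lia.
      replace (x M - x M)%C with (RtoC 0) by ring. rewrite Cmod_0. lra.
    - replace (M + 2 * S j)%nat with (S (S (M + 2 * j))) by lia.
      pose proof (Cmod_triangle (x (S (S (M + 2 * j))) - x (M + 2 * j)%nat) (x (M + 2 * j)%nat - x M)) as Htri.
      replace (x (S (S (M + 2 * j))) - x (M + 2 * j)%nat + (x (M + 2 * j)%nat - x M))%C
        with (x (S (S (M + 2 * j))) - x M)%C in Htri by ring.
      pose proof (Hpair (M + 2 * j)%nat ltac:(lia)). nra. }
  pose proof (Nat.div_mod_eq (n - M) 2) as Hdiv. pose proof (Nat.mod_upper_bound (n - M) 2 ltac:(lia)).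
  set (j := ((n - M) / 2)%nat) in *.
  pose proof (Heven j) as Hj. pose proof (Hmono (2 * j)%nat HM) as Hw2.
  assert (0 <= C2 * w M) by (apply Rmult_le_pos; [lra | pose proof (Hmono 0%nat HM); lra]).
  destruct (Nat.eq_dec ((n - M) mod 2) 0) as [Hev | Hodd].
  - replace n with (M + 2 * j)%nat by lia. nra.
  - replace n with (S (M + 2 * j)) by lia.
    pose proof (Cmod_triangle (x (S (M + 2 * j)) - x (M + 2 * j)%nat) (x (M + 2 * j)%nat - x M)) as Htri.
    replace (x (S (M + 2 * j)) - x (M + 2 * j)%nat + (x (M + 2 * j)%nat - x M))%C
      with (x (S (M + 2 * j)) - x M)%C in Htri by ring.
    pose proof (Hsing (M + 2 * j)%nat ltac:(lia)). nra.
Qed.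

Variable c : R.
Hypothesis Hc : 0 <= c.
Hypothesis Hpair : forall m, (N <= m)%nat ->
  Cmod (x (S (S m)) - x m) <= c * (Cmod (x m) + 1) * (w m - w (S (S m))).
Hypothesis Hsing : forall m, (N <= m)%nat -> Cmod (x (S m) - x m) <= c * (Cmod (x m) + 1) * w m.

(* Since [1 + c d <= exp (c d)], each pair step multiplies [|x| + 1] by at most [exp (c d)]. *)
Lemma Cmod_pair_steps_growth (M j : nat) : (N <= M)%nat ->
  Cmod (x (M + 2 * j)%nat) + 1 <= (Cmod (x M) + 1) * exp (c * (w M - w (M + 2 * j)%nat)).
Proof.
  intros HM. induction j as [|j IH].
  - rewrite Nat.add_0_r, Rminus_diag, Rmult_0_r, exp_0. lra.
  - replace (M + 2 * S j)%nat with (S (S (M + 2 * j))) by lia.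
    set (m := (M + 2 * j)%nat) in *.
    pose proof (Hpair m ltac:(unfold m; lia)) as Hstep.
    pose proof (Cmod_triangle (x (S (S m)) - x m) (x m)) as Htri.
    replace (x (S (S m)) - x m + x m)%C with (x (S (S m))) in Htri by ring.
    pose proof (antitone_shift w N Hw m 2%nat ltac:(unfold m; lia)) as Hd0.
    replace (m + 2)%nat with (S (S m)) in Hd0 by lia.
    remember (w m - w (S (S m))) as d eqn:Hd.
    pose proof (exp_ineq1_le (c * d)). pose proof (Cmod_ge_0 (x m)).
    replace (c * (w M - w (S (S m)))) with (c * (w M - w m) + c * d) by (rewrite Hd; ring).
    rewrite exp_plus, <- Rmult_assoc.
    assert (Hone : Cmod (x (S (S m))) + 1 <= (Cmod (x m) + 1) * exp (c * d)).
    { assert ((Cmod (x m) + 1) * (1 + c * d) <= (Cmod (x m) + 1) * exp (c * d))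
        by (apply Rmult_le_compat_l; lra).
      lra. }
    eapply Rle_trans; [exact Hone|]. apply Rmult_le_compat_r; [left; apply exp_pos | exact IH].
Qed.

Hypothesis Hw1 : forall m, (N <= m)%nat -> w m <= 1.

Lemma Cmod_pair_steps_bound (B : R) : Cmod (x N) <= B -> Cmod (x (S N)) <= B ->
  forall m, (N <= m)%nat -> Cmod (x m) + 1 <= (B + 1) * exp c.
Proof.
  intros HB0 HB1 m Hm.
  pose proof (Nat.div_mod_eq (m - N) 2) as Hdiv. pose proof (Nat.mod_upper_bound (m - N) 2 ltac:(lia)).
  set (b := ((m - N) mod 2)%nat) in *. set (j := ((m - N) / 2)%nat) in *.
  pose proof (Cmod_pair_steps_growth (N + b)%nat j ltac:(lia)) as Hg.
  replace (N + b + 2 * j)%nat with m in Hg by lia.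
  assert (Hxb : Cmod (x (N + b)%nat) <= B).
  { destruct (Nat.eq_dec b 0) as [-> | Hb]; [rewrite Nat.add_0_r; auto|].
    replace (N + b)%nat with (S N) by lia. auto. }
  pose proof (antitone_shift w N Hw (N + b)%nat (2 * j)%nat ltac:(lia)) as Hwm.
  replace (N + b + 2 * j)%nat with m in Hwm by lia.
  pose proof (Hw1 (N + b)%nat ltac:(lia)).
  assert (exp (c * (w (N + b)%nat - w m)) <= exp c) by (apply exp_le_exp_of_le; nra).
  pose proof (exp_pos (c * (w (N + b)%nat - w m))). pose proof (Cmod_ge_0 (x (N + b)%nat)).
  eapply Rle_trans; [exact Hg|]. apply Rmult_le_compat; lra.
Qed.

Lemma Cmod_pair_steps_cauchy (B : R) : Cmod (x N) <= B -> Cmod (x (S N)) <= B ->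
  forall M n, (N <= M)%nat -> (M <= n)%nat ->
    Cmod (x n - x M) <= 2 * (c * (B + 1) * exp c) * w M.
Proof.
  intros HB0 HB1. pose proof (Cmod_pair_steps_bound B HB0 HB1) as Hbound.
  assert (HK : 0 <= c * (B + 1) * exp c).
  { pose proof (Hbound N (le_n N)). pose proof (Cmod_ge_0 (x N)). pose proof (exp_pos c).
    apply Rmult_le_pos; [apply Rmult_le_pos|]; lra. }
  replace (2 * (c * (B + 1) * exp c)) with (c * (B + 1) * exp c + c * (B + 1) * exp c) by ring.
  apply Cmod_sub_le_of_pair_steps; auto.
  - intros m Hm. eapply Rle_trans; [apply Hpair; auto|].
    pose proof (antitone_shift w N Hw m 2%nat Hm) as Hd. replace (m + 2)%nat with (S (S m)) in Hd by lia.
    pose proof (Hbound m Hm). apply Rmult_le_compat_r; [lra|].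
    rewrite Rmult_assoc. apply Rmult_le_compat_l; lra.
  - intros m Hm. eapply Rle_trans; [apply Hsing; auto|].
    pose proof (Hw m Hm). pose proof (Hbound m Hm). apply Rmult_le_compat_r; [lra|].
    rewrite Rmult_assoc. apply Rmult_le_compat_l; lra.
Qed.

End PairSteps.

Fixpoint cprod (f : nat -> C) (M : nat) : C :=
  match M with
  | O => 1
  | S m => cprod f m * f (S m)
  end.

Fixpoint cprod_deriv (f df : nat -> C) (M : nat) : C :=
  match M with
  | O => 0
  | S m => cprod_deriv f df m * f (S m) + cprod f m * df (S m)
  end.

Lemma is_Cderive_cprod (f df : nat -> C -> C) (z : C) (M : nat) :
  (forall n, (1 <= n)%nat -> is_Cderive (f n) z (df n z)) ->
  is_Cderive (fun s => cprod (fun n => f n s) M) z (cprod_deriv (fun n => f n z) (fun n => df n z) M).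
Proof.
  intros Hf. induction M as [|m IH]; simpl.
  - apply (is_Cderive_ext (fun _ => 1)%C); [reflexivity | apply is_Cderive_const].
  - apply (is_Cderive_mult (fun s => cprod (fun n => f n s) m) (f (S m))); auto with arith.
Qed.

Lemma cprod_mult (f g : nat -> C) (M : nat) :
  (cprod f M * cprod g M)%C = cprod (fun n => f n * g n)%C M.
Proof. induction M as [|m IH]; simpl; [ring|]. rewrite <- IH. ring. Qed.

Section ProductTails.

Variables (f df : nat -> C) (w : nat -> R) (N : nat) (c : R).
Hypothesis Hc : 0 <= c.
Hypothesis Hw : forall m, (N <= m)%nat -> 0 <= w (S m) <= w m.
Hypothesis Hw1 : forall m, (N <= m)%nat -> w m <= 1.
Hypothesis Hpair : forall m, (N <= m)%nat ->
  Cmod (f (S m) * f (S (S m)) - 1) <= c * (w m - w (S (S m))).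
Hypothesis Hsing : forall m, (N <= m)%nat -> Cmod (f (S m) - 1) <= c * w m.

Lemma cprod_pair_step (m : nat) : (N <= m)%nat ->
  Cmod (cprod f (S (S m)) - cprod f m) <= c * (Cmod (cprod f m) + 1) * (w m - w (S (S m))).
Proof.
  intros Hm. replace (cprod f (S (S m)) - cprod f m)%C with (cprod f m * (f (S m) * f (S (S m)) - 1))%C
    by (simpl; ring).
  rewrite Cmod_mult. pose proof (Hpair m Hm). pose proof (Cmod_ge_0 (cprod f m)).
  pose proof (Cmod_ge_0 (f (S m) * f (S (S m)) - 1)). nra.
Qed.

Lemma cprod_single_step (m : nat) : (N <= m)%nat ->
  Cmod (cprod f (S m) - cprod f m) <= c * (Cmod (cprod f m) + 1) * w m.
Proof.
  intros Hm. replace (cprod f (S m) - cprod f m)%C with (cprod f m * (f (S m) - 1))%C by (simpl; ring).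
  rewrite Cmod_mult. pose proof (Hsing m Hm). pose proof (Cmod_ge_0 (cprod f m)).
  pose proof (Cmod_ge_0 (f (S m) - 1)). nra.
Qed.

Hypothesis Hpair_deriv : forall m, (N <= m)%nat ->
  Cmod (df (S m) * f (S (S m)) + f (S m) * df (S (S m))) <= c * (w m - w (S (S m))).
Hypothesis Hsing_deriv : forall m, (N <= m)%nat -> Cmod (df (S m)) <= c * w m.

Lemma cprod_deriv_cauchy (BP B : R) :
  0 <= BP -> (forall m, (N <= m)%nat -> Cmod (cprod f m) <= BP) ->
  Cmod (cprod_deriv f df N) <= B -> Cmod (cprod_deriv f df (S N)) <= B ->
  (forall M n, (N <= M)%nat -> (M <= n)%nat ->
     Cmod (cprod_deriv f df n - cprod_deriv f df M)
       <= 2 * (c * (1 + BP) * (B + 1) * exp (c * (1 + BP))) * w M).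
Proof.
  intros HBP HP HB0 HB1.
  apply (Cmod_pair_steps_cauchy (cprod_deriv f df) w N Hw (c * (1 + BP))); auto.
  - apply Rmult_le_pos; lra.
  - intros m Hm.
    replace (cprod_deriv f df (S (S m)) - cprod_deriv f df m)%C
      with (cprod_deriv f df m * (f (S m) * f (S (S m)) - 1)
            + cprod f m * (df (S m) * f (S (S m)) + f (S m) * df (S (S m))))%C by (simpl; ring).
    eapply Rle_trans; [apply Cmod_triangle|]. rewrite !Cmod_mult.
    assert (Hd : 0 <= c * (w m - w (S (S m)))) by (pose proof (Hw m Hm); pose proof (Hw (S m) ltac:(lia)); nra).
    assert (T1 : Cmod (cprod_deriv f df m) * Cmod (f (S m) * f (S (S m)) - 1)
                 <= Cmod (cprod_deriv f df m) * (c * (w m - w (S (S m)))))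
      by (apply Rmult_le_compat_l; [apply Cmod_ge_0 | apply Hpair; auto]).
    assert (T2 : Cmod (cprod f m) * Cmod (df (S m) * f (S (S m)) + f (S m) * df (S (S m)))
                 <= BP * (c * (w m - w (S (S m)))))
      by (apply Rmult_le_compat; auto using Cmod_ge_0).
    remember (Cmod (cprod_deriv f df m)) as D. remember (w m - w (S (S m))) as d.
    assert (0 <= D) by (subst; apply Cmod_ge_0).
    assert (0 <= c * d * (1 + BP * D)) by (apply Rmult_le_pos; nra).
    nra.
  - intros m Hm.
    replace (cprod_deriv f df (S m) - cprod_deriv f df m)%C
      with (cprod_deriv f df m * (f (S m) - 1) + cprod f m * df (S m))%C by (simpl; ring).
    eapply Rle_trans; [apply Cmod_triangle|]. rewrite !Cmod_mult.
    assert (Hd : 0 <= c * w m) by (pose proof (Hw m Hm); nra).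
    assert (T1 : Cmod (cprod_deriv f df m) * Cmod (f (S m) - 1) <= Cmod (cprod_deriv f df m) * (c * w m))
      by (apply Rmult_le_compat_l; [apply Cmod_ge_0 | apply Hsing; auto]).
    assert (T2 : Cmod (cprod f m) * Cmod (df (S m)) <= BP * (c * w m))
      by (apply Rmult_le_compat; auto using Cmod_ge_0).
    remember (Cmod (cprod_deriv f df m)) as D.
    assert (0 <= D) by (subst; apply Cmod_ge_0).
    assert (0 <= c * w m * (1 + BP * D)) by (apply Rmult_le_pos; nra).
    nra.
Qed.

End ProductTails.

(** * The Euler product *)

Section EulerProduct.

Variables (N : nat) (l : nat -> R) (eps : R) (a : nat -> Z).
Hypothesis HN : (1 <= N)%nat.
Hypothesis Heps : eps = 1 \/ eps = -1.
Hypothesis Hl_range : forall n, (1 <= n)%nat -> -1 <= l n <= 1.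
Hypothesis Hl_tail : forall n, (N <= n)%nat -> l n = eps * (-1) ^ n.
Hypothesis Ha1 : (2 <= a 1%nat)%Z.
Hypothesis Ha_incr : forall n, (1 <= n)%nat -> (a n < a (S n))%Z.

Local Notation A n := (IZR (a n)).
Local Notation X n s := (cpow_neg (IZR (a n)) s).

Lemma a_step (n : nat) : (1 <= n)%nat -> A n + 1 <= A (S n).
Proof. intros Hn. rewrite <- plus_IZR. apply IZR_le. pose proof (Ha_incr n Hn). lia. Qed.

Lemma a_ge (n : nat) : (1 <= n)%nat -> INR n + 1 <= A n.
Proof.
  induction n as [|n IH]; [lia|]. intros Hn.
  destruct (Nat.eq_dec n 0) as [-> | Hn0].
  - simpl. apply IZR_le in Ha1. lra.
  - pose proof (a_step n ltac:(lia)). rewrite S_INR. specialize (IH ltac:(lia)). lra.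
Qed.

Lemma a_ge_2 (n : nat) : (1 <= n)%nat -> 2 <= A n.
Proof. intros Hn. pose proof (a_ge n Hn). apply le_INR in Hn. simpl in Hn. lra. Qed.

Lemma l_tail_alternates (m : nat) : (N <= m)%nat ->
  (l (S m) = 1 \/ l (S m) = -1) /\ l (S (S m)) = - l (S m).
Proof.
  intros Hm. rewrite !Hl_tail by lia. split; [|simpl; ring].
  assert (Hpow : forall k, (-1) ^ k = 1 \/ (-1) ^ k = -1).
  { induction k as [|k IH]; simpl; [auto|]. destruct IH as [-> | ->]; [right | left]; ring. }
  destruct Heps as [-> | ->], (Hpow (S m)) as [-> | ->]; [left | right | right | left]; ring.
Qed.

Definition weight (eta : R) (m : nat) : R := Rpower (IZR (a m)) (- eta).

Lemma weight_step (eta : R) (m : nat) : 0 <= eta -> (1 <= m)%nat ->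
  0 <= weight eta (S m) <= weight eta m.
Proof.
  intros He Hm. unfold weight. split; [left; apply exp_pos|].
  apply Rpower_neg_antitone; auto. pose proof (a_ge_2 m Hm); lra. pose proof (a_step m Hm); lra.
Qed.

Lemma weight_le_1 (eta : R) (m : nat) : 0 <= eta -> (1 <= m)%nat -> weight eta m <= 1.
Proof. intros He Hm. apply Rpower_neg_le_1; auto. pose proof (a_ge_2 m Hm); lra. Qed.

Lemma weight_tendsto_0 (eta : R) : 0 < eta -> forall del, 0 < del ->
  exists M0, forall M, (M0 <= M)%nat -> weight eta M <= del.
Proof.
  intros He del Hd. set (T := exp (- ln del / eta)).
  assert (HT0 : 0 < T) by apply exp_pos.
  destruct (archimed T) as [HT _].
  exists (S (Z.to_nat (up T))). intros M HM.
  assert (HMT : T <= A M).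
  { pose proof (a_ge M ltac:(lia)). apply le_INR in HM.
    rewrite S_INR, INR_IZR_INZ, Z2Nat.id in HM by (apply le_IZR; lra). lra. }
  assert (HlnT : - ln del / eta <= ln (A M))
    by (rewrite <- (ln_exp (- ln del / eta)); apply ln_le; auto).
  apply Rmult_le_compat_l with (r := eta) in HlnT; [|lra].
  replace (eta * (- ln del / eta)) with (- ln del) in HlnT by (field; lra).
  unfold weight, Rpower. rewrite <- (exp_ln del) by auto. apply exp_le_exp_of_le. lra.
Qed.

Definition euler_denom (n : nat) (s : C) : C := (1 - l n * X n s)%C.

Definition euler_factor_deriv (n : nat) (s : C) : C :=
  (- (l n * ln (A n) * X n s) * (euler_factor l a n s * euler_factor l a n s))%C.

Lemma Cmod_euler_denom_bounds (n : nat) (s : C) : (1 <= n)%nat -> 1 / 2 < Re s ->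
  1 / 4 <= Cmod (euler_denom n s) <= 2.
Proof.
  intros Hn Hs. unfold euler_denom.
  pose proof (Cmod_cpow_neg_le_3_4 (A n) s (a_ge_2 n Hn) Hs).
  assert (Hl : Cmod (l n) <= 1) by (rewrite Cmod_R; apply Rabs_le; auto).
  pose proof (Cmod_ge_0 (X n s)). pose proof (Cmod_ge_0 (l n)).
  split.
  - pose proof (Cmod_triangle (1 - l n * X n s) (l n * X n s)) as Htri.
    replace (1 - l n * X n s + l n * X n s)%C with (RtoC 1) in Htri by ring.
    rewrite Cmod_1, Cmod_mult in Htri. nra.
  - eapply Rle_trans; [apply Cmod_triangle|]. rewrite Cmod_1, Cmod_opp, Cmod_mult. nra.
Qed.

Lemma euler_denom_neq_0 (n : nat) (s : C) : (1 <= n)%nat -> 1 / 2 < Re s -> euler_denom n s <> 0.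
Proof.
  intros Hn Hs E. pose proof (Cmod_euler_denom_bounds n s Hn Hs). rewrite E, Cmod_0 in H. lra.
Qed.

Lemma Cmod_euler_factor_le (n : nat) (s : C) : (1 <= n)%nat -> 1 / 2 < Re s ->
  Cmod (euler_factor l a n s) <= 4.
Proof.
  intros Hn Hs. unfold euler_factor. fold (euler_denom n s).
  pose proof (Cmod_euler_denom_bounds n s Hn Hs).
  rewrite Cmod_inv by (apply euler_denom_neq_0; auto).
  replace 4 with (/ (1 / 4)) by lra. apply Rinv_le_contravar; lra.
Qed.

Lemma is_Cderive_euler_factor (n : nat) (z : C) : (1 <= n)%nat -> 1 / 2 < Re z ->
  is_Cderive (euler_factor l a n) z (euler_factor_deriv n z).
Proof.
  intros Hn Hz. pose proof (euler_denom_neq_0 n z Hn Hz) as Hq. unfold euler_denom in Hq.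
  assert (Hden : is_Cderive (fun s => euler_denom n s) z (l n * ln (A n) * X n z)%C).
  { unfold euler_denom.
    apply (is_Cderive_ext (fun s => 1 - (fun s => l n * X n s) s)%C); [reflexivity|].
    replace (l n * ln (A n) * X n z)%C with (0 - (- ln (A n) * X n z) * l n)%C by ring.
    apply is_Cderive_minus; [apply is_Cderive_const|].
    apply (is_Cderive_comp (fun w => l n * w)%C (fun s => X n s)).
    - apply is_Cderive_cpow_neg.
    - apply (is_Cderive_ext (fun w => l n * w)%C); [reflexivity | apply is_Cderive_scal]. }
  pose proof (is_Cderive_comp Cinv (fun s => euler_denom n s) z _ _ Hden (is_Cderive_Cinv _ Hq)) as Hinv.
  unfold euler_factor_deriv, euler_factor.
  replace (- (l n * ln (A n) * X n z) * (/ (1 - l n * X n z) * / (1 - l n * X n z)))%C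
    with (l n * ln (A n) * X n z * - / (euler_denom n z * euler_denom n z))%C
    by (unfold euler_denom; field; auto).
  exact Hinv.
Qed.

Definition partial_euler_prod_deriv (M : nat) (s : C) : C :=
  cprod_deriv (fun n => euler_factor l a n s) (fun n => euler_factor_deriv n s) M.

Definition partial_euler_denom_prod (M : nat) (s : C) : C := cprod (fun n => euler_denom n s) M.

Lemma partial_euler_prod_cprod (M : nat) (s : C) :
  partial_euler_prod l a M s = cprod (fun n => euler_factor l a n s) M.
Proof. induction M as [|m IH]; simpl; [reflexivity | rewrite IH; reflexivity]. Qed.

Lemma is_Cderive_partial_euler_prod (M : nat) (z : C) : 1 / 2 < Re z ->
  is_Cderive (partial_euler_prod l a M) z (partial_euler_prod_deriv M z).
Proof.
  intros Hz. apply (is_Cderive_ext (fun s => cprod (fun n => euler_factor l a n s) M)).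
  - intros s. symmetry. apply partial_euler_prod_cprod.
  - apply (is_Cderive_cprod (euler_factor l a) euler_factor_deriv). intros n Hn.
    apply is_Cderive_euler_factor; auto.
Qed.

Lemma partial_euler_prod_mul_denom (M : nat) (s : C) : 1 / 2 < Re s ->
  (partial_euler_prod l a M s * partial_euler_denom_prod M s)%C = 1.
Proof.
  intros Hs. rewrite partial_euler_prod_cprod. unfold partial_euler_denom_prod. rewrite cprod_mult.
  induction M as [|m IH]; simpl; [reflexivity|]. rewrite IH.
  unfold euler_factor. fold (euler_denom (S m) s).
  rewrite Cinv_l by (apply euler_denom_neq_0; auto with arith). ring.
Qed.

Lemma Cmod_euler_factor_deriv_le (n : nat) (s : C) : (1 <= n)%nat -> 1 / 2 < Re s ->
  Cmod (euler_factor_deriv n s) <= 16 * (ln (A n) * Cmod (X n s)).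
Proof.
  intros Hn Hs. pose proof (Cmod_euler_factor_le n s Hn Hs) as Hf.
  pose proof (Hl_range n Hn). pose proof (ln_nonneg (A n) ltac:(pose proof (a_ge_2 n Hn); lra)).
  assert (Hl : Cmod (l n) <= 1) by (rewrite Cmod_R; apply Rabs_le; lra).
  pose proof (Cmod_ge_0 (euler_factor l a n s)). pose proof (Cmod_ge_0 (X n s)). pose proof (Cmod_ge_0 (l n)).
  unfold euler_factor_deriv. rewrite Cmod_mult, Cmod_opp, !Cmod_mult, (Cmod_R (ln _)), Rabs_pos_eq by lra.
  assert (Cmod (l n) * (Cmod (euler_factor l a n s) * Cmod (euler_factor l a n s)) <= 16) by nra.
  assert (0 <= ln (A n) * Cmod (X n s)) by nra.
  nra.
Qed.

Lemma partial_products_bounded (M : nat) : exists B, 0 <= B /\ forall s, 1 / 2 < Re s ->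
  forall m, (m <= M)%nat ->
  Cmod (partial_euler_prod l a m s) <= B /\ Cmod (partial_euler_prod_deriv m s) <= B /\
  Cmod (partial_euler_denom_prod m s) <= B.
Proof.
  induction M as [|M [B [HB0 HB]]].
  - exists 1. split; [lra|]. intros s _ m Hm. replace m with 0%nat by lia.
    rewrite partial_euler_prod_cprod. unfold partial_euler_prod_deriv, partial_euler_denom_prod.
    simpl. rewrite Cmod_0, Cmod_1. lra.
  - set (L := ln (A (S M))).
    assert (HL : 0 <= L) by (apply ln_nonneg; pose proof (a_ge_2 (S M) ltac:(lia)); lra).
    exists (B * (4 + 16 * L)). split; [nra|]. intros s Hs m Hm.
    destruct (Nat.eq_dec m (S M)) as [-> | Hne]; [|specialize (HB s Hs m ltac:(lia)); nra].
    destruct (HB s Hs M (le_n M)) as [HP [HD HQ]].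
    rewrite partial_euler_prod_cprod in *. unfold partial_euler_prod_deriv, partial_euler_denom_prod in *.
    simpl.
    pose proof (Cmod_euler_factor_le (S M) s ltac:(lia) Hs) as Hf.
    pose proof (Cmod_euler_denom_bounds (S M) s ltac:(lia) Hs) as Hq.
    assert (Hdf : Cmod (euler_factor_deriv (S M) s) <= 16 * L).
    { eapply Rle_trans; [apply Cmod_euler_factor_deriv_le; auto with arith|].
      pose proof (Cmod_cpow_neg_le_3_4 (A (S M)) s (a_ge_2 (S M) ltac:(lia)) Hs).
      pose proof (Cmod_ge_0 (X (S M) s)). fold L. nra. }
    pose proof (Cmod_ge_0 (cprod (fun n => euler_factor l a n s) M)).
    pose proof (Cmod_ge_0 (euler_factor l a (S M) s)). pose proof (Cmod_ge_0 (euler_factor_deriv (S M) s)).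
    pose proof (Cmod_ge_0 (cprod_deriv (fun n => euler_factor l a n s) (fun n => euler_factor_deriv n s) M)).
    pose proof (Cmod_ge_0 (cprod (fun n => euler_denom n s) M)).
    rewrite !Cmod_mult. split; [|split].
    + nra.
    + eapply Rle_trans; [apply Cmod_triangle|]. rewrite !Cmod_mult. nra.
    + nra.
Qed.

Lemma Rpower_a_le_weight_sub (eta : R) (m : nat) : 0 < eta -> (1 <= m)%nat ->
  Rpower (A (S m)) (- 1 - eta) <= (weight eta m - weight eta (S m)) / eta.
Proof.
  intros He Hm. pose proof (a_step m Hm). pose proof (a_ge_2 m Hm).
  eapply Rle_trans; [apply Rpower_neg_sub_1_le; lra|].
  unfold Rdiv, weight. apply Rmult_le_compat_r; [left; apply Rinv_0_lt_compat; lra|].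
  apply Rplus_le_compat_r. apply Rpower_neg_antitone; lra.
Qed.

Lemma single_term_estimates (eta : R) (s : C) (m : nat) :
  0 < eta -> 1 / 2 + 2 * eta <= Re s -> (1 <= m)%nat ->
  Cmod (X (S m) s) <= weight eta m /\ ln (A (S m)) * Cmod (X (S m) s) <= weight eta m / eta.
Proof.
  intros He Hs Hm. pose proof (a_step m Hm). pose proof (a_ge_2 m Hm).
  assert (Hw : Rpower (A (S m)) (- eta) <= weight eta m) by (apply Rpower_neg_antitone; lra).
  rewrite Cmod_cpow_neg. split.
  - eapply Rle_trans; [|exact Hw]. apply Rle_Rpower; lra.
  - eapply Rle_trans; [apply (ln_mul_Rpower_le _ _ eta); lra|].
    unfold Rdiv. apply Rmult_le_compat_r; [left; apply Rinv_0_lt_compat; lra|].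
    eapply Rle_trans; [|exact Hw]. apply Rle_Rpower; lra.
Qed.

Lemma Cmod_pair_product_le (eta : R) (s : C) (m : nat) :
  0 < eta -> 1 / 2 + 2 * eta <= Re s -> (1 <= m)%nat ->
  Cmod (X (S m) s * X (S (S m)) s) <= (weight eta m - weight eta (S m)) / eta /\
  (ln (A (S m)) + ln (A (S (S m)))) * Cmod (X (S m) s * X (S (S m)) s)
    <= 2 / eta * ((weight eta m - weight eta (S m)) / eta).
Proof.
  intros He Hs Hm.
  set (t1 := A (S m)). set (t2 := A (S (S m))). set (sig := Re s) in *.
  assert (Ht1 : 2 <= t1) by (apply a_ge_2; lia).
  assert (Ht12 : t1 + 1 <= t2) by (apply a_step; lia).
  pose proof (Rpower_a_le_weight_sub eta m He Hm) as Hdrop. fold t1 in Hdrop.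
  rewrite Cmod_mult, !Cmod_cpow_neg. fold t1 t2 sig. clearbody t1 t2 sig.
  assert (H2 : Rpower t2 (- sig) <= Rpower t1 (- sig)) by (apply Rpower_neg_antitone; lra).
  assert (Hpos1 : 0 < Rpower t1 (- sig)) by apply exp_pos.
  assert (Hpos2 : 0 < Rpower t2 (- sig)) by apply exp_pos.
  assert (Hsq : Rpower t1 (- sig) * Rpower t1 (- sig) <= Rpower t1 (- 1 - eta)).
  { rewrite <- Rpower_plus. apply Rle_Rpower; lra. }
  assert (H12 : Rpower t1 (- sig) * Rpower t2 (- sig) <= Rpower t1 (- sig) * Rpower t1 (- sig))
    by (apply Rmult_le_compat_l; lra).
  split; [lra|].
  assert (HL : ln t1 <= ln t2) by (apply ln_le; lra).
  assert (HL1 : 0 <= ln t1) by (apply ln_nonneg; lra).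
  assert (HL2 : ln t2 * Rpower t2 (- sig) <= Rpower t1 (eta - sig) / eta).
  { eapply Rle_trans; [apply (ln_mul_Rpower_le _ _ eta); lra|].
    unfold Rdiv. apply Rmult_le_compat_r; [left; apply Rinv_0_lt_compat; lra|].
    replace (eta - sig) with (- (sig - eta)) by ring. apply Rpower_neg_antitone; lra. }
  assert (Hprod : Rpower t1 (eta - sig) * Rpower t1 (- sig) <= Rpower t1 (- 1 - eta)).
  { rewrite <- Rpower_plus. apply Rle_Rpower; lra. }
  assert (Hsum : (ln t1 + ln t2) * (Rpower t1 (- sig) * Rpower t2 (- sig))
                 <= 2 * (ln t2 * Rpower t2 (- sig)) * Rpower t1 (- sig)).
  { assert (0 <= Rpower t1 (- sig) * Rpower t2 (- sig)) by (apply Rmult_le_pos; lra).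
    assert ((ln t2 - ln t1) * (Rpower t1 (- sig) * Rpower t2 (- sig)) >= 0) by (apply Rle_ge, Rmult_le_pos; lra).
    nra. }
  eapply Rle_trans; [exact Hsum|].
  assert (0 <= ln t2 * Rpower t2 (- sig)) by (apply Rmult_le_pos; lra).
  apply Rle_trans with (2 * (Rpower t1 (eta - sig) / eta) * Rpower t1 (- sig)); [nra|].
  replace (2 * (Rpower t1 (eta - sig) / eta) * Rpower t1 (- sig))
    with (2 / eta * (Rpower t1 (eta - sig) * Rpower t1 (- sig))) by (field; lra).
  apply Rmult_le_compat_l; [apply Rdiv_le_0_compat; lra | lra].
Qed.

Definition pair_defect (m : nat) (s : C) : C :=
  (l (S m) * (X (S m) s - X (S (S m)) s) + X (S m) s * X (S (S m)) s)%C.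

Definition pair_defect_deriv (m : nat) (s : C) : C :=
  (l (S m) * (ln (A (S (S m))) * X (S (S m)) s - ln (A (S m)) * X (S m) s)
   - (ln (A (S m)) + ln (A (S (S m)))) * (X (S m) s * X (S (S m)) s))%C.

Lemma euler_denom_pair (m : nat) (s : C) : (N <= m)%nat ->
  (euler_denom (S m) s * euler_denom (S (S m)) s)%C = (1 - pair_defect m s)%C.
Proof.
  intros Hm. destruct (l_tail_alternates m Hm) as [Hc Hc2].
  unfold euler_denom, pair_defect. rewrite Hc2.
  destruct Hc as [-> | ->]; rewrite ?RtoC_opp; ring.
Qed.

Lemma euler_factor_pair_sub_1 (m : nat) (s : C) : (N <= m)%nat -> 1 / 2 < Re s ->
  (euler_factor l a (S m) s * euler_factor l a (S (S m)) s - 1)%C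
  = (pair_defect m s * (euler_factor l a (S m) s * euler_factor l a (S (S m)) s))%C.
Proof.
  intros Hm Hs. pose proof (euler_denom_pair m s Hm) as Hpair.
  pose proof (euler_denom_neq_0 (S m) s ltac:(lia) Hs).
  pose proof (euler_denom_neq_0 (S (S m)) s ltac:(lia) Hs).
  unfold euler_factor. fold (euler_denom (S m) s) (euler_denom (S (S m)) s).
  replace (pair_defect m s) with (1 - euler_denom (S m) s * euler_denom (S (S m)) s)%C
    by (rewrite Hpair; ring).
  field. auto.
Qed.

Lemma euler_factor_deriv_pair (m : nat) (s : C) : (N <= m)%nat -> 1 / 2 < Re s ->
  (euler_factor_deriv (S m) s * euler_factor l a (S (S m)) s
   + euler_factor l a (S m) s * euler_factor_deriv (S (S m)) s)%C
  = (pair_defect_deriv m s * ((euler_factor l a (S m) s * euler_factor l a (S (S m)) s)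
       * (euler_factor l a (S m) s * euler_factor l a (S (S m)) s)))%C.
Proof.
  intros Hm Hs. destruct (l_tail_alternates m Hm) as [Hc Hc2].
  pose proof (euler_denom_neq_0 (S m) s ltac:(lia) Hs).
  pose proof (euler_denom_neq_0 (S (S m)) s ltac:(lia) Hs).
  unfold euler_factor_deriv, pair_defect_deriv, euler_factor.
  fold (euler_denom (S m) s) (euler_denom (S (S m)) s) in *.
  unfold euler_denom in *. rewrite Hc2, RtoC_opp in *.
  set (c := RtoC (l (S m))) in *.
  assert (Hcc : (c * c)%C = 1) by (unfold c; rewrite <- RtoC_mult; destruct Hc as [-> | ->]; f_equal; ring).
  (* With [c * c] in place of [1] the identity is a rational identity that [field] can check. *)
  set (P := ((ln (A (S m)) + ln (A (S (S m)))) * (X (S m) s * X (S (S m)) s))%C).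
  replace P with (c * c * P)%C by (rewrite Hcc; ring). unfold P.
  field. split; auto.
Qed.

Lemma Cmod_pair_defect_le (eta K : R) (s : C) (m : nat) :
  0 < eta -> 1 / 2 + 2 * eta <= Re s -> Cmod s <= K -> (N <= m)%nat ->
  Cmod (pair_defect m s) <= (2 * K + 1) / eta * (weight eta m - weight eta (S (S m))).
Proof.
  intros He Hs HK Hm.
  destruct (Cmod_pair_product_le eta s m He Hs ltac:(lia)) as [Hprod _].
  assert (Hdiff : Cmod (X (S m) s - X (S (S m)) s) <= 2 * (K / eta) * (weight eta (S m) - weight eta (S (S m)))).
  { apply Cmod_cpow_neg_sub_le; try lra.
    pose proof (a_ge_2 (S m) ltac:(lia)). pose proof (a_step (S m) ltac:(lia)). lra. }
  destruct (l_tail_alternates m Hm) as [Hc _].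
  assert (Hcm : Cmod (l (S m)) = 1) by (rewrite Cmod_R; destruct Hc as [-> | ->]; unfold Rabs; destruct (Rcase_abs _); lra).
  pose proof (weight_step eta m ltac:(lra) ltac:(lia)). pose proof (weight_step eta (S m) ltac:(lra) ltac:(lia)).
  pose proof (Cmod_ge_0 s).
  unfold pair_defect. eapply Rle_trans; [apply Cmod_triangle|]. rewrite Cmod_mult, Hcm, Rmult_1_l.
  apply Rle_trans with (2 * (K / eta) * (weight eta (S m) - weight eta (S (S m)))
                        + (weight eta m - weight eta (S m)) / eta); [lra|].
  replace ((2 * K + 1) / eta * (weight eta m - weight eta (S (S m))))
    with (2 * (K / eta) * (weight eta (S m) - weight eta (S (S m))) + (weight eta m - weight eta (S m)) / eta
          + (2 * (K / eta) * (weight eta m - weight eta (S m)) + (weight eta (S m) - weight eta (S (S m))) / eta))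
    by (field; lra).
  assert (0 <= 2 * (K / eta) * (weight eta m - weight eta (S m))) by (apply Rmult_le_pos; [apply Rmult_le_pos, Rdiv_le_0_compat|]; lra).
  assert (0 <= (weight eta (S m) - weight eta (S (S m))) / eta) by (apply Rdiv_le_0_compat; lra).
  lra.
Qed.

Lemma Cmod_pair_defect_deriv_le (eta K : R) (s : C) (m : nat) :
  0 < eta -> 1 / 2 + 2 * eta <= Re s -> Cmod s <= K -> (N <= m)%nat ->
  Cmod (pair_defect_deriv m s)
    <= (2 * ((1 + K / eta) / eta) + 2 / eta * / eta) * (weight eta m - weight eta (S (S m))).
Proof.
  intros He Hs HK Hm.
  destruct (Cmod_pair_product_le eta s m He Hs ltac:(lia)) as [_ Hprod].
  assert (Hdiff : Cmod (ln (A (S m)) * X (S m) s - ln (A (S (S m))) * X (S (S m)) s)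
    <= 2 * ((1 + K / eta) / eta) * (weight eta (S m) - weight eta (S (S m)))).
  { apply Cmod_ln_mul_cpow_neg_sub_le; try lra.
    pose proof (a_ge_2 (S m) ltac:(lia)). pose proof (a_step (S m) ltac:(lia)). lra. }
  destruct (l_tail_alternates m Hm) as [Hc _].
  assert (Hcm : Cmod (l (S m)) = 1) by (rewrite Cmod_R; destruct Hc as [-> | ->]; unfold Rabs; destruct (Rcase_abs _); lra).
  pose proof (weight_step eta m ltac:(lra) ltac:(lia)). pose proof (weight_step eta (S m) ltac:(lra) ltac:(lia)).
  assert (HL : 0 <= ln (A (S m)) + ln (A (S (S m)))).
  { pose proof (a_ge_2 (S m) ltac:(lia)). pose proof (a_ge_2 (S (S m)) ltac:(lia)).
    pose proof (ln_nonneg (A (S m)) ltac:(lra)). pose proof (ln_nonneg (A (S (S m))) ltac:(lra)). lra. }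
  unfold pair_defect_deriv. eapply Rle_trans; [apply Cmod_triangle|].
  rewrite Cmod_opp, !Cmod_mult, Hcm, Rmult_1_l, <- RtoC_plus, Cmod_R, (Rabs_pos_eq (_ + _)) by lra.
  rewrite <- Cmod_opp. replace (- (ln (A (S (S m))) * X (S (S m)) s - ln (A (S m)) * X (S m) s))%C
    with (ln (A (S m)) * X (S m) s - ln (A (S (S m))) * X (S (S m)) s)%C by ring.
  rewrite <- Cmod_mult.
  remember (2 * ((1 + K / eta) / eta)) as k eqn:Hkdef. assert (Hk : 0 <= k).
  { rewrite Hkdef. pose proof (Cmod_ge_0 s). apply Rmult_le_pos; [lra | apply Rdiv_le_0_compat; [|lra]].
    pose proof (Rdiv_le_0_compat K eta ltac:(lra) He). lra. }
  assert (He2 : 0 <= 2 / eta * / eta) by (apply Rmult_le_pos; [apply Rdiv_le_0_compat | left; apply Rinv_0_lt_compat]; lra).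
  assert (k * (weight eta (S m) - weight eta (S (S m))) <= k * (weight eta m - weight eta (S (S m))))
    by (apply Rmult_le_compat_l; lra).
  assert (2 / eta * / eta * (weight eta m - weight eta (S m)) <= 2 / eta * / eta * (weight eta m - weight eta (S (S m))))
    by (apply Rmult_le_compat_l; lra).
  replace (2 / eta * ((weight eta m - weight eta (S m)) / eta)) with (2 / eta * / eta * (weight eta m - weight eta (S m))) in Hprod
    by (field; lra).
  lra.
Qed.

Lemma euler_pair_step_estimates (eta K : R) (s : C) (m : nat) :
  0 < eta -> 1 / 2 + 2 * eta <= Re s -> Cmod s <= K -> (N <= m)%nat ->
  Cmod (euler_factor l a (S m) s * euler_factor l a (S (S m)) s - 1)
    <= 16 * ((2 * K + 1) / eta) * (weight eta m - weight eta (S (S m))) /\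
  Cmod (euler_factor_deriv (S m) s * euler_factor l a (S (S m)) s
        + euler_factor l a (S m) s * euler_factor_deriv (S (S m)) s)
    <= 256 * (2 * ((1 + K / eta) / eta) + 2 / eta * / eta) * (weight eta m - weight eta (S (S m))) /\
  Cmod (euler_denom (S m) s * euler_denom (S (S m)) s - 1)
    <= (2 * K + 1) / eta * (weight eta m - weight eta (S (S m))).
Proof.
  intros He Hs HsK Hm. assert (Hs' : 1 / 2 < Re s) by lra.
  pose proof (Cmod_pair_defect_le eta K s m He Hs HsK Hm) as Hu.
  pose proof (Cmod_pair_defect_deriv_le eta K s m He Hs HsK Hm) as Hu'.
  pose proof (Cmod_euler_factor_le (S m) s ltac:(lia) Hs') as Hf1.
  pose proof (Cmod_euler_factor_le (S (S m)) s ltac:(lia) Hs') as Hf2.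
  set (F := (euler_factor l a (S m) s * euler_factor l a (S (S m)) s)%C).
  assert (HF : Cmod F <= 16).
  { unfold F. rewrite Cmod_mult. pose proof (Cmod_ge_0 (euler_factor l a (S m) s)).
    pose proof (Cmod_ge_0 (euler_factor l a (S (S m)) s)). nra. }
  pose proof (Cmod_ge_0 F). pose proof (Cmod_ge_0 (pair_defect m s)).
  pose proof (Cmod_ge_0 (pair_defect_deriv m s)).
  split; [|split].
  - unfold F. rewrite euler_factor_pair_sub_1, Cmod_mult by auto. fold F. nra.
  - rewrite euler_factor_deriv_pair by auto. fold F. rewrite Cmod_mult, Cmod_mult.
    assert (Cmod F * Cmod F <= 256) by nra. nra.
  - rewrite euler_denom_pair by auto.
    replace (1 - pair_defect m s - 1)%C with (- pair_defect m s)%C by ring. rewrite Cmod_opp. exact Hu.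
Qed.

Lemma euler_single_step_estimates (eta : R) (s : C) (m : nat) :
  0 < eta -> 1 / 2 + 2 * eta <= Re s -> (1 <= m)%nat ->
  Cmod (euler_factor l a (S m) s - 1) <= 4 * weight eta m /\
  Cmod (euler_factor_deriv (S m) s) <= 16 / eta * weight eta m /\
  Cmod (euler_denom (S m) s - 1) <= weight eta m.
Proof.
  intros He Hs Hm. assert (Hs' : 1 / 2 < Re s) by lra.
  destruct (single_term_estimates eta s m He Hs Hm) as [HX HLX].
  pose proof (Cmod_euler_factor_le (S m) s ltac:(lia) Hs') as Hf.
  pose proof (Hl_range (S m) ltac:(lia)) as Hl.
  assert (Hlm : Cmod (l (S m)) <= 1) by (rewrite Cmod_R; apply Rabs_le; lra).
  assert (HlX : Cmod (l (S m)) * Cmod (X (S m) s) <= weight eta m)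
    by (pose proof (Cmod_ge_0 (X (S m) s)); pose proof (Cmod_ge_0 (l (S m))); nra).
  pose proof (Cmod_ge_0 (euler_factor l a (S m) s)).
  pose proof (Cmod_ge_0 (X (S m) s)). pose proof (Cmod_ge_0 (l (S m))).
  split; [|split].
  - replace (euler_factor l a (S m) s - 1)%C with (euler_factor l a (S m) s * (l (S m) * X (S m) s))%C.
    + rewrite !Cmod_mult. nra.
    + pose proof (euler_denom_neq_0 (S m) s ltac:(lia) Hs'). unfold euler_factor.
      fold (euler_denom (S m) s).
      replace (l (S m) * X (S m) s)%C with (1 - euler_denom (S m) s)%C by (unfold euler_denom; ring).
      field. auto.
  - eapply Rle_trans; [apply Cmod_euler_factor_deriv_le; auto with arith|].
    unfold Rdiv in *. nra.
  - unfold euler_denom. replace (1 - l (S m) * X (S m) s - 1)%C with (- (l (S m) * X (S m) s))%C by ring.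
    rewrite Cmod_opp, Cmod_mult. exact HlX.
Qed.

Lemma euler_step_estimates (eta K : R) : 0 < eta -> 0 <= K ->
  exists c, 0 <= c /\ forall s, 1 / 2 + 2 * eta <= Re s -> Cmod s <= K ->
    (forall m, (N <= m)%nat -> Cmod (euler_factor l a (S m) s * euler_factor l a (S (S m)) s - 1)
       <= c * (weight eta m - weight eta (S (S m)))) /\
    (forall m, (N <= m)%nat -> Cmod (euler_factor_deriv (S m) s * euler_factor l a (S (S m)) s
          + euler_factor l a (S m) s * euler_factor_deriv (S (S m)) s)
       <= c * (weight eta m - weight eta (S (S m)))) /\
    (forall m, (N <= m)%nat -> Cmod (euler_denom (S m) s * euler_denom (S (S m)) s - 1)
       <= c * (weight eta m - weight eta (S (S m)))) /\
    (forall m, (N <= m)%nat -> Cmod (euler_factor l a (S m) s - 1) <= c * weight eta m) /\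
    (forall m, (N <= m)%nat -> Cmod (euler_factor_deriv (S m) s) <= c * weight eta m) /\
    (forall m, (N <= m)%nat -> Cmod (euler_denom (S m) s - 1) <= c * weight eta m).
Proof.
  intros He HK.
  set (k1 := (2 * K + 1) / eta). set (k2 := 2 * ((1 + K / eta) / eta) + 2 / eta * / eta).
  assert (Hk1 : 0 <= k1) by (unfold k1; apply Rdiv_le_0_compat; lra).
  assert (Hk2 : 0 <= k2).
  { unfold k2. assert (0 <= K / eta) by (apply Rdiv_le_0_compat; lra).
    assert (0 <= 2 / eta * / eta) by (apply Rmult_le_pos; [apply Rdiv_le_0_compat | left; apply Rinv_0_lt_compat]; lra).
    assert (0 <= (1 + K / eta) / eta) by (apply Rdiv_le_0_compat; lra). lra. }
  assert (H16 : 0 <= 16 / eta) by (apply Rdiv_le_0_compat; lra).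
  exists (16 * k1 + 256 * k2 + 16 / eta + 4). split; [lra|].
  intros s Hs HsK. repeat split; intros m Hm;
    pose proof (weight_step eta m ltac:(lra) ltac:(lia)); pose proof (weight_step eta (S m) ltac:(lra) ltac:(lia));
    destruct (euler_pair_step_estimates eta K s m He Hs HsK Hm) as [P1 [P2 P3]];
    destruct (euler_single_step_estimates eta s m He Hs ltac:(lia)) as [S1 [S2 S3]];
    fold k1 k2 in P1, P2, P3; nra.
Qed.

Lemma euler_products_tail_bounds (eta K : R) : 0 < eta -> 0 <= K ->
  exists k beta, 0 <= k /\ 0 < beta /\ forall s, 1 / 2 + 2 * eta <= Re s -> Cmod s <= K ->
    (forall M n, (N <= M)%nat -> (M <= n)%nat ->
       Cmod (partial_euler_prod l a n s - partial_euler_prod l a M s) <= k * weight eta M /\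
       Cmod (partial_euler_prod_deriv n s - partial_euler_prod_deriv M s) <= k * weight eta M) /\
    (forall m, (N <= m)%nat -> beta <= Cmod (partial_euler_prod l a m s)).
Proof.
  intros He HK. destruct (euler_step_estimates eta K He HK) as [c [Hc Hest]].
  destruct (partial_products_bounded (S N)) as [B [HB HBm]].
  remember ((B + 1) * exp c) as BP eqn:HBPdef.
  assert (HBP : 1 <= BP) by (rewrite HBPdef; pose proof (exp_ineq1_le c); nra).
  set (CP := 2 * (c * (B + 1) * exp c)).
  set (CD := 2 * (c * (1 + BP) * (B + 1) * exp (c * (1 + BP)))).
  assert (HCP : 0 <= CP) by (unfold CP; pose proof (exp_pos c); apply Rmult_le_pos; [lra|]; repeat apply Rmult_le_pos; lra).
  assert (HCD : 0 <= CD) by (unfold CD; pose proof (exp_pos (c * (1 + BP))); apply Rmult_le_pos; [lra|]; repeat apply Rmult_le_pos; lra).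
  exists (CP + CD), (/ BP). split; [lra|]. split; [apply Rinv_0_lt_compat; lra|].
  intros s Hs HsK. assert (Hs' : 1 / 2 < Re s) by lra.
  set (f := fun n => euler_factor l a n s). set (df := fun n => euler_factor_deriv n s).
  set (q := fun n => euler_denom n s).
  assert (Hw : forall m, (N <= m)%nat -> 0 <= weight eta (S m) <= weight eta m)
    by (intros m Hm; apply weight_step; [lra | lia]).
  assert (Hw1 : forall m, (N <= m)%nat -> weight eta m <= 1)
    by (intros m Hm; apply weight_le_1; [lra | lia]).
  destruct (Hest s Hs HsK) as [Hf2 [Hdf2 [Hq2 [Hf1 [Hdf1 Hq1]]]]].
  destruct (HBm s Hs' N ltac:(lia)) as [HP0 [HD0 HQ0]]. destruct (HBm s Hs' (S N) (le_n _)) as [HP1 [HD1 HQ1]].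
  rewrite !partial_euler_prod_cprod in HP0, HP1.
  pose proof (Cmod_pair_steps_bound (cprod f) (weight eta) N Hw c Hc (cprod_pair_step f _ N c Hf2) Hw1 B
    HP0 HP1) as HPbound.
  pose proof (Cmod_pair_steps_bound (cprod q) (weight eta) N Hw c Hc (cprod_pair_step q _ N c Hq2) Hw1 B
    HQ0 HQ1) as HQbound.
  rewrite <- HBPdef in HPbound, HQbound.
  split.
  - intros M n HM Hn. rewrite !partial_euler_prod_cprod. unfold partial_euler_prod_deriv.
    pose proof (weight_step eta M ltac:(lra) ltac:(lia)). split.
    + eapply Rle_trans; [apply (Cmod_pair_steps_cauchy (cprod f) (weight eta) N Hw c Hc
        (cprod_pair_step f _ N c Hf2) (cprod_single_step f _ N c Hf1) Hw1 B HP0 HP1); auto|].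
      fold CP. apply Rmult_le_compat_r; lra.
    + eapply Rle_trans; [apply (cprod_deriv_cauchy f df (weight eta) N c Hc Hw Hw1 Hf2 Hf1 Hdf2 Hdf1 BP B);
        auto; [lra | intros m Hm'; pose proof (HPbound m Hm'); lra]|].
      fold CD. apply Rmult_le_compat_r; lra.
  - intros m Hm'. apply (inv_le_Cmod_of_mul_eq_1 _ (partial_euler_denom_prod m s)).
    + apply partial_euler_prod_mul_denom; auto.
    + apply HQbound; auto.
Qed.

Lemma euler_products_uniformly_cauchy (eta K : R) : 0 < eta -> 0 <= K ->
  forall e, 0 < e -> exists M0, forall m n s, (M0 <= m)%nat -> (M0 <= n)%nat ->
    1 / 2 + 2 * eta <= Re s -> Cmod s <= K ->
    Cmod (partial_euler_prod l a m s - partial_euler_prod l a n s) <= e /\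
    Cmod (partial_euler_prod_deriv m s - partial_euler_prod_deriv n s) <= e.
Proof.
  intros He HK e Hpos.
  destruct (euler_products_tail_bounds eta K He HK) as [k [beta [Hk [_ Htail]]]].
  destruct (weight_tendsto_0 eta He (e / (2 * k + 1))) as [M0 HM0]; [apply Rdiv_lt_0_compat; lra|].
  exists (max M0 N). intros m n s Hm Hn Hs HsK.
  destruct (proj1 (Htail s Hs HsK) (max M0 N) m ltac:(lia) Hm) as [Pm Dm].
  destruct (proj1 (Htail s Hs HsK) (max M0 N) n ltac:(lia) Hn) as [Pn Dn].
  pose proof (HM0 (max M0 N) ltac:(lia)) as Hw.
  assert (Hsmall : k * weight eta (max M0 N) <= e / 2).
  { apply Rle_trans with (k * (e / (2 * k + 1))); [apply Rmult_le_compat_l; lra|].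
    apply Rmult_le_reg_r with (2 * k + 1); [lra|].
    replace (k * (e / (2 * k + 1)) * (2 * k + 1)) with (k * e) by (field; lra). nra. }
  assert (Htri : forall x y z : C, Cmod (x - y) <= Cmod (x - z) + Cmod (y - z)).
  { intros x y z. rewrite <- (Cmod_opp (y - z)).
    replace (x - y)%C with ((x - z) + - (y - z))%C by ring. apply Cmod_triangle. }
  split.
  - eapply Rle_trans; [apply Htri with (z := partial_euler_prod l a (max M0 N) s)|]. lra.
  - eapply Rle_trans; [apply Htri with (z := partial_euler_prod_deriv (max M0 N) s)|]. lra.
Qed.

Lemma partial_euler_prod_converges (s : C) : 1 / 2 < Re s ->
  forall e, 0 < e -> exists M, forall n, (M <= n)%nat ->
    Cmod (partial_euler_prod l a n s - Clim (fun m => partial_euler_prod l a m s)) < e.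
Proof.
  intros Hs. apply Clim_spec. intros e He.
  destruct (euler_products_uniformly_cauchy ((Re s - 1 / 2) / 2) (Cmod s) ltac:(lra) (Cmod_ge_0 s) e He)
    as [M HM].
  exists M. intros m n Hm Hn. apply (HM m n s Hm Hn); lra.
Qed.

Lemma euler_prod_limit_neq_0 (s : C) : 1 / 2 < Re s -> Clim (fun m => partial_euler_prod l a m s) <> 0.
Proof.
  intros Hs.
  destruct (euler_products_tail_bounds ((Re s - 1 / 2) / 2) (Cmod s) ltac:(lra) (Cmod_ge_0 s))
    as [k [beta [_ [Hbeta Htail]]]].
  apply (lim_neq_0_of_Cmod_ge _ _ N beta Hbeta (partial_euler_prod_converges s Hs)).
  apply Htail; lra.
Qed.

Lemma euler_prod_limit_holomorphic (s0 : C) : 1 / 2 < Re s0 ->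
  C_holomorphic_at (fun s => Clim (fun m => partial_euler_prod l a m s)) s0.
Proof.
  intros Hs0. set (r := (Re s0 - 1 / 2) / 2). assert (Hr : 0 < r) by (unfold r; lra).
  assert (Hball : forall z, Cmod (z - s0) < r -> 1 / 2 + 2 * (r / 2) <= Re z /\ Cmod z <= Cmod s0 + r).
  { intros z Hz. split.
    - pose proof (re_le_Cmod (z - s0)) as H. rewrite Re_minus in H.
      apply Rabs_le_between in H. unfold r in *. lra.
    - replace z with (s0 + (z - s0))%C at 1 by ring.
      eapply Rle_trans; [apply Cmod_triangle | lra]. }
  apply (C_holomorphic_at_of_is_Cderive _ _ (Clim (fun n => partial_euler_prod_deriv n s0))).
  apply (is_Cderive_lim (fun n => partial_euler_prod l a n) partial_euler_prod_deriv _ s0 r Hr).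
  - intros n z Hz. destruct (Hball z Hz). apply is_Cderive_partial_euler_prod. lra.
  - intros z Hz. destruct (Hball z Hz). apply partial_euler_prod_converges. lra.
  - intros e He.
    destruct (euler_products_uniformly_cauchy (r / 2) (Cmod s0 + r) ltac:(lra)
      ltac:(pose proof (Cmod_ge_0 s0); lra) e He) as [M HM].
    exists M. intros m n z Hm Hn Hz. destruct (Hball z Hz). apply (HM m n z Hm Hn); auto.
Qed.

End EulerProduct.

Theorem proposition2p1
  (N : nat) (HN : (1 <= N)%nat)
  (l : nat -> R) (eps : R)
  (Heps : eps = 1 \/ eps = -1)
  (Hl_range : forall n : nat, (1 <= n)%nat -> -1 <= l n <= 1)
  (Hl_tail : forall n : nat, (N <= n)%nat -> l n = eps * (-1) ^ n)
  (a : nat -> Z)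
  (Ha1 : (2 <= a 1%nat)%Z)
  (Ha_incr : forall n : nat, (1 <= n)%nat -> (a n < a (S n))%Z) :
  exists F : C -> C,
    (forall s : C, 1 < Re s ->
       filterlim (fun M : nat => partial_euler_prod l a M s) eventually (locally (F s))) /\
    (forall s : C, 1 / 2 < Re s -> C_holomorphic_at F s /\ F s <> RtoC 0).
Proof.
  exists (fun s => Clim (fun M => partial_euler_prod l a M s)). split.
  - intros s Hs. apply filterlim_of_Cmod.
    apply (partial_euler_prod_converges N l eps a); auto. lra.
  - intros s Hs. split.
    + apply (euler_prod_limit_holomorphic N l eps a); auto.
    + apply (euler_prod_limit_neq_0 N l eps a); auto.
Qed.
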